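(* Let $s,l,n\in\mathbb N$ with $l>s$, let $Y$, $\Pi$, $J_{l,n}$, $C_{12}$, $T$, $d$, $\chi$, $\delta_n$ be as in the context, and let $x^*\in\mathbb R$ satisfy $$\min_{i\in\mathbb Z}|x^*-y_i|\ge 2sC_{12}\frac{\pi}{n}.$$ Then, with positive constants $C_{13},C_{14},C_{15}$ depending only on $s$ and $l$: (i) $\frac12<d_{l,n}(x^*;s;Y)<\frac32$; (ii) $T(x)=\frac1{2\pi}x+\tilde T(x)$ with $\tilde T\in\mathbb T_{l(n-1)+s}$; (iii) $\Pi(x^* )T'(x)\Pi(x)\ge0$ for all $x\in\mathbb R$; (iv) $|T'(x)|\le C_{13}\,n\,\delta_n^{2(l-s)}(x;x^* )$ for all $x\in\mathbb R$; (v) $|T'(x)|\ge \frac1{C_{14}}\,n\,\delta_n^{2l}(x;x^* )\left|\frac{\Pi(x)}{\Pi(x^* )}\right|$ for all $x\in\bigcup_{\nu\in\mathbb Z}\left[x^*+\frac{2\pi\nu}{n}+\frac{\pi}{2n},\,x^*+\frac{2\pi\nu}{n}+\frac{2\pi}{n}-\frac{\pi}{2n}\right]$; (vi) $|\chi(x;x^* )-T(x)|\le C_{15}\,\delta_n^{2(l-s)-1}(x;x^* )$ for all $x$ with $|x-x^*|\le2\pi$.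
   Context: $Y=\{y_i\}_{i=1}^{2s}$ with $-\pi\le y_{2s}<\dots<y_1<\pi$, extended to all $i\in\mathbb Z$ by $y_i:=y_{i+2s}+2\pi$; $\Pi(x):=\prod_{i=1}^{2s}\sin\frac12(x-y_i)$. $\mathbb T_m$ is the space of real trigonometric polynomials of order $\le m$. Jackson-type kernel: $J_{l,n}(t):=\frac1{\gamma_{l,n}}\left(\frac{\sin(nt/2)}{\sin(t/2)}\right)^{2l}$, $\gamma_{l,n}:=\int_{-\pi}^{\pi}\left(\frac{\sin(nt/2)}{\sin(t/2)}\right)^{2l}dt$. $C_{12}=C_{12}(l)$ is a positive constant such that $\int_{-\pi}^{\pi}(1+n|t|)^{\nu}J_{l,n}(t)\,dt\le C_{12}$ for all $n\in\mathbb N$ and $\nu=0,1,\dots,2l-2$. For $x^*$ with $\Pi(x^* )\ne0$: $d_{l,n}(x^*;s;Y):=\int_{x^*-\pi}^{x^*+\pi}J_{l,n}(t-x^* )\frac{\Pi(t)}{\Pi(x^* )}dt$ and $T(x)=T_{l,n}(x;x^*;s;Y):=\frac1{d_{l,n}(x^*;s;Y)}\int_{x^*-\pi}^{x}J_{l,n}(t-x^* )\frac{\Pi(t)}{\Pi(x^* )}dt$. Further $\chi(x;x^* ):=0$ if $x\le x^*$ and $:=1$ if $x>x^*$; $\delta_n(x;x^* ):=\min\{1,\frac1{n|\sin\frac{x-x^*}2|}\}$. *)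

From Stdlib Require Import Reals ZArith Lia Lra.
From Coquelicot Require Import Coquelicot.
Open Scope R_scope.

Definition Y_ok (s : nat) (y : nat -> R) : Prop :=
  -PI <= y (2 * s)%nat /\
  (forall i : nat, (1 <= i)%nat -> (i < 2 * s)%nat -> y (S i) < y i) /\
  y 1%nat < PI.

(* extension y_i := y_{i+2s} + 2 pi to all integers i *)
Definition yext (s : nat) (y : nat -> R) (i : Z) : R :=
  y (S (Z.to_nat ((i - 1) mod (2 * Z.of_nat s))))
  - 2 * PI * IZR ((i - 1) / (2 * Z.of_nat s)).

Fixpoint prodR (f : nat -> R) (m : nat) : R :=
  match m with
  | O => 1
  | S k => prodR f k * f (S k)
  end.

Definition PiY (s : nat) (y : nat -> R) (x : R) : R :=
  prodR (fun i => sin ((x - y i) / 2)) (2 * s).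

(* sin(nt/2)/sin(t/2), extended by continuity (up to sign, which is
   irrelevant after raising to the even power 2l) at zeros of sin(t/2) *)
Definition Dn (n : nat) (t : R) : R :=
  if Req_EM_T (sin (t / 2)) 0 then INR n
  else sin (INR n * t / 2) / sin (t / 2).

Definition gamma_ln (l n : nat) : R :=
  RInt (fun t => (Dn n t) ^ (2 * l)) (- PI) PI.

Definition J_ln (l n : nat) (t : R) : R := (Dn n t) ^ (2 * l) / gamma_ln l n.

Definition C12_prop (l : nat) (C : R) : Prop :=
  0 < C /\
  forall n nu : nat, (1 <= n)%nat -> (nu <= 2 * l - 2)%nat ->
    RInt (fun t => (1 + INR n * Rabs t) ^ nu * J_ln l n t) (- PI) PI <= C.

Definition d_ln (s l n : nat) (y : nat -> R) (xs : R) : R :=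
  RInt (fun t => J_ln l n (t - xs) * (PiY s y t / PiY s y xs)) (xs - PI) (xs + PI).

Definition T_ln (s l n : nat) (y : nat -> R) (xs : R) (x : R) : R :=
  / d_ln s l n y xs *
  RInt (fun t => J_ln l n (t - xs) * (PiY s y t / PiY s y xs)) (xs - PI) x.

Definition chi (xs x : R) : R := if Rle_dec x xs then 0 else 1.

(* delta_n(x;xs) = min{1, 1/(n abs(sin((x-xs)/2)))}, with 1/0 = +infinity *)
Definition delta_n (n : nat) (x xs : R) : R :=
  if Req_EM_T (sin ((x - xs) / 2)) 0 then 1
  else Rmin 1 (/ (INR n * Rabs (sin ((x - xs) / 2)))).

Definition trig_poly (m : nat) (f : R -> R) : Prop :=
  exists a b : nat -> R, forall x,
    f x = sum_f_R0 (fun k => a k * cos (INR k * x) + b k * sin (INR k * x)) m.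

From Stdlib Require Import Reals ZArith Lia Lra.
From Coquelicot Require Import Coquelicot.
Open Scope R_scope.

(* Write F_n(t) := (sin(nt/2)/sin(t/2))^2, a trigonometric polynomial of order
   n - 1, so that J_{l,n} = F_n^l / gamma with gamma of order n^(2l-1).  The
   integrand J_{l,n}(t - xs) Pi(t)/Pi(xs) of T is then a trigonometric
   polynomial of order l(n-1) + s, and T is x/(2 pi) plus such a polynomial.
   Since xs is at distance >= 2 s C12 pi/n from Y, every factor of
   Pi(t + xs)/Pi(xs) has the form cos(t/2) + c_j sin(t/2) with
   |c_j| <= n/(2 s C12); hence this ratio is
   1 + O(n|t|/C12 + (1 + n|t|)^(2s)/C12^2) near 0 and O((1 + n|t|)^(2s))
   everywhere.  Integrated against J_{l,n}, the moments bounded by C12 give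
   |d - 1| < 1/2.  Together with F_n <= (n delta_n)^2 this bounds T' by
   n delta_n^(2(l-s)), and integrating the tail n/(1 + n|t|)^(2(l-s)) bounds
   chi - T.  The lower bound for T' uses sin^2(nt/2) >= 1/4 on the given
   intervals. *)

(** * The Fejér kernel *)

Fixpoint dirichlet (m : nat) (t : R) : R :=
  match m with O => 1 | S m' => dirichlet m' t + 2 * cos (INR (S m') * t) end.
(* [fejer n] is n times the Fejér kernel of order n - 1; it equals [Dn n ^ 2]. *)
Fixpoint fejer (n : nat) (t : R) : R :=
  match n with O => 0 | S n' => fejer n' t + dirichlet n' t end.

Lemma dirichlet_S m t : dirichlet (S m) t = dirichlet m t + 2 * cos (INR (S m) * t).
Proof. reflexivity. Qed.
Lemma fejer_S n t : fejer (S n) t = fejer n t + dirichlet n t.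
Proof. reflexivity. Qed.

Lemma cos_eq_1_sub_sin_half (t : R) : cos t = 1 - 2 * sin (t/2) ^ 2.
Proof. replace t with (2 * (t/2)) at 1 by field. rewrite cos_2a_sin. ring. Qed.

Lemma sin_half_sqr_mul_dirichlet (m : nat) (t : R) :
  sin (t/2) ^ 2 * dirichlet m t = (cos (INR m * t) - cos (INR (S m) * t)) / 2.
Proof.
  induction m as [|m IH].
  - simpl dirichlet. replace (INR 0 * t) with 0 by (simpl; ring).
    replace (INR 1 * t) with t by (simpl; ring). rewrite cos_0, (cos_eq_1_sub_sin_half t). field.
  - rewrite dirichlet_S, Rmult_plus_distr_l, IH.
    set (A := INR (S m) * t).
    replace (INR (S (S m)) * t) with (A + t) by (unfold A; rewrite !S_INR; ring).
    replace (INR m * t) with (A - t) by (unfold A; rewrite !S_INR; ring).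
    rewrite cos_plus, cos_minus, (cos_eq_1_sub_sin_half t). field.
Qed.

Lemma sin_half_sqr_mul_fejer (n : nat) (t : R) :
  sin (t/2) ^ 2 * fejer n t = sin (INR n * t / 2) ^ 2.
Proof.
  induction n as [|n IH].
  - replace (INR 0 * t / 2) with 0 by (simpl; field). rewrite sin_0. simpl; ring.
  - rewrite fejer_S, Rmult_plus_distr_l, IH, sin_half_sqr_mul_dirichlet.
    rewrite (cos_eq_1_sub_sin_half (INR n * t)), (cos_eq_1_sub_sin_half (INR (S n) * t)).
    field.
Qed.

Lemma dirichlet_le (m : nat) (t : R) : dirichlet m t <= 2 * INR m + 1.
Proof.
  induction m as [|m IH].
  - simpl; lra.
  - rewrite dirichlet_S. pose proof (COS_bound (INR (S m) * t)). pose proof (S_INR m). lra.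
Qed.

Lemma fejer_le_sqr (n : nat) (t : R) : fejer n t <= INR n ^ 2.
Proof.
  induction n as [|n IH].
  - simpl; lra.
  - rewrite fejer_S, S_INR. pose proof (dirichlet_le n t). nra.
Qed.

Lemma cos_mult_sin_half_eq0 (t : R) : sin (t/2) = 0 -> forall k, cos (INR k * t) = 1.
Proof.
  intros H k.
  assert (Hc : cos t = 1) by (rewrite cos_eq_1_sub_sin_half, H; ring).
  assert (Hs : sin t = 0).
  { replace t with (2 * (t/2)) by field. rewrite sin_2a, H. ring. }
  induction k as [|k IH].
  - simpl. rewrite Rmult_0_l. apply cos_0.
  - rewrite S_INR. replace ((INR k + 1) * t) with (INR k * t + t) by ring.
    rewrite cos_plus, IH, Hc, Hs. ring.
Qed.

Lemma fejer_sin_half_eq0 (n : nat) (t : R) : sin (t/2) = 0 -> fejer n t = INR n ^ 2.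
Proof.
  intro H.
  assert (HD : forall m, dirichlet m t = 2 * INR m + 1).
  { induction m as [|m IH]. simpl; ring.
    rewrite dirichlet_S, IH, (cos_mult_sin_half_eq0 t H). rewrite (S_INR m). ring. }
  induction n as [|n IH]. simpl; ring.
  rewrite fejer_S, IH, HD, S_INR. ring.
Qed.

Lemma Dn_sqr (n : nat) (t : R) : Dn n t ^ 2 = fejer n t.
Proof.
  unfold Dn. destruct (Req_EM_T (sin (t/2)) 0) as [H|H].
  - rewrite fejer_sin_half_eq0; auto.
  - pose proof (sin_half_sqr_mul_fejer n t) as E.
    apply (Rmult_eq_reg_l (sin (t/2) ^ 2)); [| apply pow_nonzero; auto].
    rewrite E. field. auto.
Qed.

Lemma fejer_ge0 (n : nat) (t : R) : 0 <= fejer n t.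
Proof. rewrite <- Dn_sqr. apply pow2_ge_0. Qed.

Lemma fejer_le_inv_sin_half_sqr (n : nat) (t : R) : sin (t/2) <> 0 -> fejer n t <= / sin (t/2) ^ 2.
Proof.
  intro H. pose proof (sin_half_sqr_mul_fejer n t) as E.
  assert (P : 0 < sin (t/2) ^ 2) by (apply pow2_gt_0; auto).
  apply (Rmult_le_reg_l (sin (t/2) ^ 2)); auto.
  rewrite E. rewrite Rinv_r by lra.
  pose proof (SIN_bound (INR n * t / 2)). nra.
Qed.

Lemma Dn_pow_mult2 (n l : nat) (t : R) : Dn n t ^ (2 * l) = fejer n t ^ l.
Proof. rewrite pow_mult, Dn_sqr. reflexivity. Qed.

(** * Trigonometric polynomials *)

(* An inductive description of [trig_poly] (see [TrigPoly_trig_poly]), convenient for closure properties. *)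
Inductive TrigPoly (m : nat) : (R -> R) -> Prop :=
| TrigPoly0 : TrigPoly m (fun _ => 0)
| TrigPolyS : forall k a b f, (k <= m)%nat -> TrigPoly m f ->
    TrigPoly m (fun x => f x + (a * cos (INR k * x) + b * sin (INR k * x)))
| TrigPoly_ext : forall f g, TrigPoly m f -> (forall x, f x = g x) -> TrigPoly m g.

Lemma TrigPoly_mono m m' f : (m <= m')%nat -> TrigPoly m f -> TrigPoly m' f.
Proof.
  intros Hm H. induction H.
  - apply TrigPoly0.
  - apply TrigPolyS; auto; lia.
  - eapply TrigPoly_ext; eauto.
Qed.

Lemma TrigPoly_mode m k a b f : (k <= m)%nat ->
  (forall x, f x = a * cos (INR k * x) + b * sin (INR k * x)) -> TrigPoly m f.
Proof.
  intros Hk H. eapply TrigPoly_ext. apply (TrigPolyS m k a b _ Hk (TrigPoly0 m)).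
  intro x. simpl. rewrite H. ring.
Qed.

Lemma TrigPoly_const m c : TrigPoly m (fun _ => c).
Proof.
  apply (TrigPoly_mode m 0 c 0); [lia|]. intro x. simpl. rewrite Rmult_0_l, cos_0, sin_0. ring.
Qed.

Lemma TrigPoly_add m f g : TrigPoly m f -> TrigPoly m g -> TrigPoly m (fun x => f x + g x).
Proof.
  intros Hf Hg. induction Hg.
  - eapply TrigPoly_ext; [exact Hf|]. intro; ring.
  - eapply TrigPoly_ext. apply (TrigPolyS m k a b _ H IHHg). intro x; simpl; ring.
  - eapply TrigPoly_ext; [eassumption|]. intro x; cbv beta; f_equal; auto.
Qed.

Lemma TrigPoly_scal m c f : TrigPoly m f -> TrigPoly m (fun x => c * f x).
Proof.
  intros Hf. induction Hf.
  - eapply TrigPoly_ext; [apply TrigPoly0|]. intro; simpl. ring.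
  - eapply TrigPoly_ext. apply (TrigPolyS m k (c*a) (c*b) _ H IHHf). intro x; simpl; ring.
  - eapply TrigPoly_ext; [eassumption|]. intro x; cbv beta; f_equal; auto.
Qed.

Lemma TrigPoly_mode_sub M k j a b : (k <= M)%nat -> (j <= M)%nat ->
  TrigPoly M (fun x => a * cos (INR k * x - INR j * x) + b * sin (INR k * x - INR j * x)).
Proof.
  intros Hk Hj. destruct (le_ge_dec k j) as [H|H].
  - apply (TrigPoly_mode M (j - k) a (- b)); [lia|]. intro x.
    rewrite minus_INR by exact H.
    replace (INR k * x - INR j * x) with (- ((INR j - INR k) * x)) by ring.
    rewrite cos_neg, sin_neg. ring.
  - apply (TrigPoly_mode M (k - j) a b); [lia|]. intro x.
    rewrite minus_INR by exact H.
    replace ((INR k - INR j) * x) with (INR k * x - INR j * x) by ring. ring.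
Qed.

Lemma TrigPoly_cos_mul m p k g : (k <= m)%nat -> TrigPoly p g ->
  TrigPoly (m + p) (fun x => cos (INR k * x) * g x).
Proof.
  intros Hk Hg. induction Hg.
  - eapply TrigPoly_ext; [apply TrigPoly0|]. intro; simpl; ring.
  - eapply TrigPoly_ext.
    + apply TrigPoly_add; [exact IHHg|]. apply TrigPoly_add.
      * apply (TrigPoly_mode (m + p) (k + k0) (a/2) (b/2)); [lia|]. intro x; reflexivity.
      * apply (TrigPoly_mode_sub (m+p) k k0 (a/2) (-b/2)); lia.
    + intro x. rewrite plus_INR.
      replace ((INR k + INR k0) * x) with (INR k * x + INR k0 * x) by ring.
      rewrite cos_plus, sin_plus, cos_minus, sin_minus. field.
  - eapply TrigPoly_ext; [eassumption|]. intro x; cbv beta; f_equal; auto.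
Qed.

Lemma TrigPoly_sin_mul m p k g : (k <= m)%nat -> TrigPoly p g ->
  TrigPoly (m + p) (fun x => sin (INR k * x) * g x).
Proof.
  intros Hk Hg. induction Hg.
  - eapply TrigPoly_ext; [apply TrigPoly0|]. intro; simpl; ring.
  - eapply TrigPoly_ext.
    + apply TrigPoly_add; [exact IHHg|]. apply TrigPoly_add.
      * apply (TrigPoly_mode (m + p) (k + k0) (-b/2) (a/2)); [lia|]. intro x; reflexivity.
      * apply (TrigPoly_mode_sub (m+p) k k0 (b/2) (a/2)); lia.
    + intro x. rewrite plus_INR.
      replace ((INR k + INR k0) * x) with (INR k * x + INR k0 * x) by ring.
      rewrite cos_plus, sin_plus, cos_minus, sin_minus. field.
  - eapply TrigPoly_ext; [eassumption|]. intro x; cbv beta; f_equal; auto.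
Qed.

Lemma TrigPoly_mul m p f g : TrigPoly m f -> TrigPoly p g -> TrigPoly (m + p) (fun x => f x * g x).
Proof.
  intros Hf Hg. induction Hf.
  - eapply TrigPoly_ext; [apply TrigPoly0|]. intro; simpl; ring.
  - eapply TrigPoly_ext.
    + apply (TrigPoly_add _ (fun x => f x * g x)
        (fun x => a * (cos (INR k * x) * g x) + b * (sin (INR k * x) * g x))); [exact IHHf|].
      apply (TrigPoly_add _ (fun x => a * (cos (INR k * x) * g x)) (fun x => b * (sin (INR k * x) * g x))).
      * apply TrigPoly_scal. apply TrigPoly_cos_mul; auto.
      * apply TrigPoly_scal. apply TrigPoly_sin_mul; auto.
    + intro x. simpl. ring.
  - eapply TrigPoly_ext; [eassumption|]. intro x; cbv beta; f_equal; auto.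
Qed.

Lemma TrigPoly_pow m f l : TrigPoly m f -> TrigPoly (l * m) (fun x => f x ^ l).
Proof.
  intro Hf. induction l as [|l IH].
  - simpl. apply TrigPoly_const.
  - simpl. apply TrigPoly_mul; auto.
Qed.

Lemma TrigPoly_shift m c f : TrigPoly m f -> TrigPoly m (fun x => f (x + c)).
Proof.
  intro Hf. induction Hf.
  - apply TrigPoly0.
  - eapply TrigPoly_ext.
    + apply (TrigPolyS m k (a * cos (INR k * c) + b * sin (INR k * c))
                    (b * cos (INR k * c) - a * sin (INR k * c)) _ H IHHf).
    + intro x. simpl.
      replace (INR k * (x + c)) with (INR k * x + INR k * c) by ring.
      rewrite cos_plus, sin_plus. ring.
  - eapply TrigPoly_ext; [eassumption|]. intro x; cbv beta; auto.
Qed.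

Lemma TrigPoly_dirichlet m : TrigPoly m (dirichlet m).
Proof.
  induction m as [|m IH].
  - eapply TrigPoly_ext; [apply (TrigPoly_const 0 1)|]. intro; reflexivity.
  - eapply TrigPoly_ext.
    + apply (TrigPoly_add _ (dirichlet m) (fun x => 2 * cos (INR (S m) * x))). apply (TrigPoly_mono m); [lia|exact IH].
      apply (TrigPoly_mode (S m) (S m) 2 0); [lia|]. intro; ring.
    + intro x. rewrite dirichlet_S. simpl. ring.
Qed.

Lemma TrigPoly_fejer n : TrigPoly (pred n) (fejer n).
Proof.
  induction n as [|n IH].
  - apply TrigPoly0.
  - eapply TrigPoly_ext.
    + apply (TrigPoly_add _ (fejer n) (dirichlet n)). apply (TrigPoly_mono (pred n)); [lia|exact IH].
      apply TrigPoly_dirichlet.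
    + intro x. rewrite fejer_S. reflexivity.
Qed.

Lemma TrigPoly_sin_half_pair y1 y2 : TrigPoly 1 (fun x => sin ((x - y1)/2) * sin ((x - y2)/2)).
Proof.
  set (c := (y1 + y2)/2).
  eapply TrigPoly_ext.
  - apply TrigPoly_add. apply (TrigPoly_const 1 (cos ((y2 - y1)/2) / 2)).
    apply (TrigPoly_mode 1 1 (- cos c / 2) (- sin c / 2)); [lia|]. intro; reflexivity.
  - intro x. simpl. rewrite Rmult_1_l.
    assert (E : forall A B, sin A * sin B = (cos (A - B) - cos (A + B)) / 2).
    { intros A B. rewrite cos_minus, cos_plus. field. }
    rewrite E.
    replace ((x - y1)/2 - (x - y2)/2) with ((y2 - y1)/2) by field.
    replace ((x - y1)/2 + (x - y2)/2) with (x - c) by (unfold c; field).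
    rewrite cos_minus. field.
Qed.

Lemma TrigPoly_PiY s y : TrigPoly s (PiY s y).
Proof.
  unfold PiY. induction s as [|s IH].
  - eapply TrigPoly_ext; [apply (TrigPoly_const 0 1)|]. intro; reflexivity.
  - replace (2 * S s)%nat with (S (S (2 * s))) by lia.
    eapply TrigPoly_ext.
    + apply (TrigPoly_mono (s + 1)); [lia|].
      apply (TrigPoly_mul s 1 (fun x => prodR (fun i => sin ((x - y i) / 2)) (2 * s))
        (fun x => sin ((x - y (S (2*s)))/2) * sin ((x - y (S (S (2*s))))/2))). exact IH. apply (TrigPoly_sin_half_pair (y (S (2*s))) (y (S (S (2*s))))).
    + intro x. cbv beta. rewrite <- Rmult_assoc. reflexivity.
Qed.

Lemma TrigPoly_continuous m f : TrigPoly m f -> forall x, continuous f x.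
Proof.
  intros Hf. induction Hf; intro x.
  - apply continuous_const.
  - apply (continuous_plus f (fun x => a * cos (INR k * x) + b * sin (INR k * x))); auto.
    apply (continuous_plus (fun x => a * cos (INR k * x)) (fun x => b * sin (INR k * x))).
    + apply (continuous_mult (fun _ => a) (fun x => cos (INR k * x))).
      apply continuous_const. apply continuous_cos_comp.
      apply (continuous_mult (fun _ => INR k) (fun x => x)). apply continuous_const. apply continuous_id.
    + apply (continuous_mult (fun _ => b) (fun x => sin (INR k * x))).
      apply continuous_const. apply continuous_sin_comp.
      apply (continuous_mult (fun _ => INR k) (fun x => x)). apply continuous_const. apply continuous_id.
  - eapply continuous_ext; [exact H|]. auto.
Qed.

Lemma plus_R (x y : R) : plus x y = x + y. Proof. reflexivity. Qed.
Lemma minus_R (x y : R) : minus x y = x - y. Proof. reflexivity. Qed.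
Lemma scal_R' (x y : R) : scal x y = x * y. Proof. reflexivity. Qed.

Lemma TrigPoly_antiderivative m g : TrigPoly m g -> exists a0 S, TrigPoly m S /\
  (forall x, is_derive S x (g x - a0)) /\ (forall x, S (x + 2 * PI) = S x).
Proof.
  intro Hg. induction Hg as [|k a b f Hk Hf IH|f g Hf IH Heq].
  - exists 0, (fun _ => 0). split; [apply TrigPoly0|]. split.
    + intro x. auto_derive; auto; ring.
    + intro; reflexivity.
  - destruct IH as [a0 [S0 [HS [Hd Hp]]]]. destruct k as [|k].
    + exists (a0 + a), S0. split; [exact HS|]. split; [|exact Hp].
      intro x. replace (f x + (a * cos (INR 0 * x) + b * sin (INR 0 * x)) - (a0 + a))
        with (f x - a0) by (simpl; rewrite Rmult_0_l, cos_0, sin_0; ring). apply Hd.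
    + set (K := INR (S k)).
      assert (HK : K <> 0) by (unfold K; apply not_0_INR; lia).
      exists a0, (fun x => S0 x + (a / K * sin (K * x) - b / K * cos (K * x))).
      split; [|split].
      * apply (TrigPoly_add m S0 (fun x => a / K * sin (K * x) - b / K * cos (K * x))); auto.
        apply (TrigPoly_mode m (S k) (- b / K) (a / K)); auto. intro x. cbv beta. unfold K. unfold Rdiv. ring.
      * intro x.
        assert (H2 : is_derive (fun x => a / K * sin (K * x) - b / K * cos (K * x)) x
                   (a * cos (K * x) + b * sin (K * x))).
        { auto_derive; auto. field. auto. }
        pose proof (is_derive_plus _ _ x _ _ (Hd x) H2) as H3.
        unfold K in *. unfold plus in H3. simpl in H3.
        replace (f x + (a * cos (INR (S k) * x) + b * sin (INR (S k) * x)) - a0)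
          with (f x - a0 + (a * cos (INR (S k) * x) + b * sin (INR (S k) * x))) by ring.
        exact H3.
      * intro x. rewrite Hp.
        replace (K * (x + 2 * PI)) with (K * x + 2 * INR (S k) * PI) by (unfold K; ring).
        rewrite sin_period, cos_period. reflexivity.
  - destruct IH as [a0 [S0 [HS [Hd Hp]]]]. exists a0, S0. split; auto. split; auto.
    intro x. rewrite <- Heq. apply Hd.
Qed.

Lemma TrigPoly_RInt m g : TrigPoly m g -> exists a0 S, TrigPoly m S /\ (forall x, S (x + 2 * PI) = S x) /\
  forall a b, RInt g a b = a0 * (b - a) + (S b - S a).
Proof.
  intro Hg. destruct (TrigPoly_antiderivative m g Hg) as [a0 [S0 [HS [Hd Hp]]]].
  exists a0, S0. split; auto. split; auto. intros a b.
  apply (@is_RInt_unique R_CompleteNormedModule g a b).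
  assert (H1 : is_RInt (fun x => g x - a0) a b (minus (S0 b) (S0 a))).
  { apply (@is_RInt_derive R_CompleteNormedModule S0 (fun x => g x - a0) a b). intros; apply Hd.
    intros x _. apply (continuous_minus g (fun _ => a0)). apply (TrigPoly_continuous m g Hg).
    apply continuous_const. }
  pose proof (is_RInt_plus _ _ a b _ _ H1 (is_RInt_const a b a0)) as H2.
  assert (E : @eq R (plus (minus (S0 b) (S0 a)) (scal (b - a) a0)) (a0 * (b - a) + (S0 b - S0 a))).
  { rewrite minus_R, plus_R, scal_R'. ring. }
  rewrite <- E.
  eapply is_RInt_ext; [|exact H2].
  intros x _. cbv beta. rewrite plus_R. unfold Rminus. rewrite Rplus_assoc, Rplus_opp_l, Rplus_0_r. reflexivity.
Qed.

Lemma sum_f_R0_indicator (k m : nat) (c : R) :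
  sum_f_R0 (fun j => if Nat.eqb j k then c else 0) m = if Nat.leb k m then c else 0.
Proof.
  induction m as [|m IH].
  - simpl. destruct k; simpl; reflexivity.
  - cbn [sum_f_R0]. rewrite IH.
    destruct (Nat.leb_spec k m); destruct (Nat.eqb_spec (S m) k);
    destruct (Nat.leb_spec k (S m)); try lia; ring.
Qed.

Lemma sum_f_R0_zero (m : nat) (f : nat -> R) : (forall j, f j = 0) -> sum_f_R0 f m = 0.
Proof.
  intro H. induction m as [|m IH]; simpl; rewrite ?IH, H; ring.
Qed.

Lemma TrigPoly_trig_poly m f : TrigPoly m f -> trig_poly m f.
Proof.
  intro Hf. induction Hf as [|k a b f Hk Hf IH|f g Hf IH Heq].
  - exists (fun _ => 0), (fun _ => 0). intro x. symmetry. apply sum_f_R0_zero. intro; ring.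
  - destruct IH as [A [B HAB]].
    exists (fun j => A j + if Nat.eqb j k then a else 0),
           (fun j => B j + if Nat.eqb j k then b else 0).
    intro x.
    rewrite (sum_eq _ (fun j => (A j * cos (INR j * x) + B j * sin (INR j * x)) +
        (if Nat.eqb j k then a * cos (INR k * x) + b * sin (INR k * x) else 0))).
    + rewrite sum_plus, sum_f_R0_indicator, <- HAB.
      destruct (Nat.leb_spec k m); [reflexivity|lia].
    + intros j _. destruct (Nat.eqb_spec j k); [subst|]; ring.
  - destruct IH as [A [B HAB]]. exists A, B. intro x. rewrite <- Heq. apply HAB.
Qed.

Lemma PI_gt_3 : 3 < PI.
Proof. pose proof PI2_3_2. lra. Qed.

Lemma Rabs_sin_le z : Rabs (sin z) <= Rabs z.
Proof.
  assert (H : forall z, 0 <= z -> Rabs (sin z) <= z).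
  { intros w Hw. destruct Hw as [Hw|Hw]; [|subst; rewrite sin_0, Rabs_R0; lra].
    pose proof (sin_lt_x w Hw). pose proof (SIN_bound w).
    destruct (Rle_or_lt 1 w).
    - apply Rabs_le; lra.
    - assert (0 <= sin w) by (apply sin_ge_0; pose proof PI_gt_3; lra).
      rewrite Rabs_pos_eq; lra. }
  destruct (Rle_or_lt 0 z).
  - rewrite (Rabs_pos_eq z) by lra. auto.
  - replace z with (- (- z)) by ring. rewrite sin_neg, Rabs_Ropp, Rabs_Ropp.
    rewrite (Rabs_pos_eq (-z)) by lra. apply H; lra.
Qed.

Lemma jordan_ineq (y : R) : 0 <= y <= PI/2 -> 2 / PI * y <= sin y.
Proof.
  intros [H0 H1]. pose proof PI_RGT_0 as HP.
  set (h := fun y => sin y - 2 / PI * y).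
  assert (Hd : forall x, is_derive h x (cos x - 2 / PI)).
  { intro x. unfold h. auto_derive; auto. ring. }
  assert (Hc : forall x, continuity_pt h x).
  { intro x. apply continuity_pt_filterlim. apply (@ex_derive_continuous R_AbsRing R_NormedModule h x).
    eexists. apply Hd. }
  destruct (Rle_or_lt (2 / PI * y) (sin y)) as [Hy|Hy]; auto. exfalso.
  assert (Hy0 : 0 < y).
  { destruct H0 as [H0|H0]; auto. subst y. rewrite sin_0 in Hy. lra. }
  assert (Hy1 : y < PI/2).
  { destruct H1 as [H1|H1]; auto. subst y. rewrite sin_PI2 in Hy.
    replace (2 / PI * (PI/2)) with 1 in Hy by (field; lra). lra. }
  destruct (MVT_gen h 0 y (fun x => cos x - 2 / PI)) as [c1 [Hc1 E1]].
  { intros; apply Hd. } { intros; apply Hc. }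
  destruct (MVT_gen h y (PI/2) (fun x => cos x - 2 / PI)) as [c2 [Hc2 E2]].
  { intros; apply Hd. } { intros; apply Hc. }
  rewrite Rmin_left in Hc1 by lra. rewrite Rmax_right in Hc1 by lra.
  rewrite Rmin_left in Hc2 by lra. rewrite Rmax_right in Hc2 by lra.
  unfold h in E1, E2. rewrite sin_0, sin_PI2 in *.
  replace (2 / PI * (PI/2)) with 1 in E2 by (field; lra).
  assert (A1 : cos c1 - 2 / PI < 0).
  { assert (0 < y - 0) by lra.
    destruct (Rlt_or_le (cos c1 - 2/PI) 0) as [Q|Q]; auto.
    assert (0 <= (cos c1 - 2/PI) * (y - 0)) by (apply Rmult_le_pos; lra). lra. }
  assert (A2 : 0 < cos c2 - 2 / PI).
  { assert (0 < PI/2 - y) by lra.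
    destruct (Rlt_or_le 0 (cos c2 - 2/PI)) as [Q|Q]; auto.
    assert ((cos c2 - 2/PI) * (PI/2 - y) <= 0).
    { apply Rmult_le_0_r; lra. } lra. }
  assert (cos c2 <= cos c1).
  { destruct (Req_dec c1 c2) as [E|E]. subst; lra.
    left. apply cos_decreasing_1; lra. }
  lra.
Qed.

Lemma sin_half_abs_ge (w : R) : Rabs w <= PI -> Rabs w / PI <= Rabs (sin (w / 2)).
Proof.
  intro H. pose proof PI_RGT_0.
  destruct (Rle_or_lt 0 w) as [Hw|Hw].
  - rewrite Rabs_pos_eq in * by lra.
    pose proof (jordan_ineq (w/2)) as J.
    assert (0 <= sin (w/2)) by (apply sin_ge_0; lra).
    rewrite Rabs_pos_eq by lra.
    replace (w / PI) with (2 / PI * (w / 2)) by (field; lra). apply J; lra.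
  - rewrite Rabs_left in * by lra.
    pose proof (jordan_ineq (-w/2)) as J.
    replace (w / 2) with (- (-w/2)) by field. rewrite sin_neg.
    assert (0 <= sin (-w/2)) by (apply sin_ge_0; lra).
    rewrite Rabs_Ropp, Rabs_pos_eq by lra.
    replace (- w / PI) with (2 / PI * (- w / 2)) by (field; lra). apply J; lra.
Qed.

Lemma Rabs_sin_plus_IZR_PI (z : R) (q : Z) : Rabs (sin (z + IZR q * PI)) = Rabs (sin z).
Proof.
  rewrite sin_plus.
  rewrite (sin_eq_0_1 (IZR q * PI)) by (exists q; reflexivity).
  assert (Hc : cos (IZR q * PI) ^ 2 = 1).
  { pose proof (sin2_cos2 (IZR q * PI)) as E.
    rewrite (sin_eq_0_1 (IZR q * PI)) in E by (exists q; reflexivity).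
    unfold Rsqr in E. simpl. lra. }
  rewrite Rmult_0_r, Rplus_0_r, Rabs_mult.
  assert (Rabs (cos (IZR q * PI)) = 1).
  { rewrite <- (Rabs_pos_eq 1) by lra. apply Rsqr_eq_abs_0. unfold Rsqr. simpl in Hc. lra. }
  rewrite H. ring.
Qed.

Lemma exists_shift_2PI_le_PI (u : R) : exists q : Z, Rabs (u + 2 * PI * IZR q) <= PI.
Proof.
  pose proof PI_RGT_0.
  destruct (archimed (u / (2 * PI) - 1/2)) as [A1 A2].
  exists (- up (u / (2 * PI) - 1/2))%Z. rewrite opp_IZR.
  set (m := IZR (up (u / (2 * PI) - 1 / 2))) in *.
  assert (E : u + 2 * PI * - m = 2 * PI * (u / (2 * PI) - m)) by (field; lra).
  rewrite E, Rabs_mult, Rabs_pos_eq by lra.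
  assert (Rabs (u / (2 * PI) - m) <= 1/2).
  { apply Rabs_le. lra. }
  nra.
Qed.

Lemma yext_shift (s : nat) (y : nat -> R) (j : nat) (q : Z) : (1 <= j <= 2 * s)%nat ->
  yext s y (Z.of_nat j + 2 * Z.of_nat s * q)%Z = y j - 2 * PI * IZR q.
Proof.
  intro Hj. unfold yext.
  assert (Hs : (2 * Z.of_nat s <> 0)%Z) by lia.
  replace (Z.of_nat j + 2 * Z.of_nat s * q - 1)%Z with (Z.of_nat (j - 1) + q * (2 * Z.of_nat s))%Z by lia.
  rewrite Z_mod_plus_full, Z.div_add by exact Hs.
  rewrite Z.mod_small by lia. rewrite Z.div_small by lia.
  rewrite Nat2Z.id. replace (S (j - 1)) with j by lia.
  simpl Z.add. reflexivity.
Qed.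

Lemma sin_half_dist_ge (s : nat) (y : nat -> R) (xs D : R) :
  (1 <= s)%nat -> (forall i : Z, D <= Rabs (xs - yext s y i)) ->
  forall j, (1 <= j <= 2 * s)%nat -> D / PI <= Rabs (sin ((xs - y j) / 2)) /\ D <= PI.
Proof.
  intros Hs Hd j Hj. pose proof PI_RGT_0.
  destruct (exists_shift_2PI_le_PI (xs - y j)) as [q Hq].
  pose proof (Hd (Z.of_nat j + 2 * Z.of_nat s * q)%Z) as Hi.
  rewrite yext_shift in Hi by exact Hj.
  replace (xs - (y j - 2 * PI * IZR q)) with (xs - y j + 2 * PI * IZR q) in Hi by ring.
  split; [|lra].
  replace ((xs - y j) / 2) with ((xs - y j + 2 * PI * IZR q) / 2 + IZR (- q) * PI)
    by (rewrite opp_IZR; field).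
  rewrite Rabs_sin_plus_IZR_PI.
  pose proof (sin_half_abs_ge _ Hq).
  apply Rle_trans with (Rabs (xs - y j + 2 * PI * IZR q) / PI); auto.
  unfold Rdiv. apply Rmult_le_compat_r; auto. left; apply Rinv_0_lt_compat; lra.
Qed.

Definition Rcont (f : R -> R) := forall z, continuous f z.

Lemma Rcont_mult f g : Rcont f -> Rcont g -> Rcont (fun t => f t * g t).
Proof. intros Hf Hg z. apply (continuous_mult f g); auto. Qed.
Lemma Rcont_plus f g : Rcont f -> Rcont g -> Rcont (fun t => f t + g t).
Proof. intros Hf Hg z. apply (continuous_plus f g); auto. Qed.
Lemma Rcont_const c : Rcont (fun _ => c).
Proof. intro z. apply continuous_const. Qed.
Lemma Rcont_id : Rcont (fun t => t).
Proof. intro z. apply continuous_id. Qed.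
Lemma Rcont_minus f g : Rcont f -> Rcont g -> Rcont (fun t => f t - g t).
Proof. intros Hf Hg z. apply (continuous_minus f g); auto. Qed.
Lemma Rcont_abs f : Rcont f -> Rcont (fun t => Rabs (f t)).
Proof. intros Hf z. apply (continuous_comp f Rabs); auto. apply continuous_Rabs. Qed.
Lemma Rcont_pow f k : Rcont f -> Rcont (fun t => f t ^ k).
Proof.
  intros Hf. induction k as [|k IH].
  - intro z. apply (continuous_const 1).
  - apply (Rcont_mult f (fun t => f t ^ k)); auto.
Qed.
Lemma Rcont_inv f : Rcont f -> (forall t, f t <> 0) -> Rcont (fun t => / f t).
Proof. intros Hf H z. apply continuous_Rinv_comp; auto. Qed.
Lemma Rcont_shift f c : Rcont f -> Rcont (fun t => f (t + c)).
Proof. intros Hf z. apply (continuous_comp (fun t => t + c) f); auto.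
  apply (continuous_plus (fun t => t) (fun _ => c)). apply continuous_id. apply continuous_const. Qed.
Lemma Rcont_ext f g : Rcont f -> (forall t, f t = g t) -> Rcont g.
Proof. intros Hf H z. apply (continuous_ext f); auto. Qed.

Ltac Rcont_tac :=
  repeat first
    [ assumption | apply Rcont_const | apply Rcont_id
    | apply Rcont_minus | apply Rcont_plus | apply Rcont_mult
    | apply Rcont_abs | apply Rcont_pow ].

Lemma Rcont_ex_RInt f a b : Rcont f -> ex_RInt f a b.
Proof. intro H. apply (@ex_RInt_continuous R_CompleteNormedModule). intros; apply H. Qed.

Lemma RInt_shift (f : R -> R) (c a b : R) : Rcont f ->
  RInt (fun s => f (s - c)) a b = RInt f (a - c) (b - c).
Proof.
  intro Hf.
  pose proof (RInt_comp_lin f 1 (- c) a b) as E.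
  replace (1 * a + - c) with (a - c) in E by ring.
  replace (1 * b + - c) with (b - c) in E by ring.
  rewrite <- E by (apply Rcont_ex_RInt; auto).
  apply RInt_ext. intros x _.
  replace (1 * x + - c) with (x - c) by ring. symmetry. apply (@scal_one R_Ring R_ModuleSpace).
Qed.

Lemma RInt_Chasles_R f a b c : Rcont f -> RInt f a b + RInt f b c = RInt f a c.
Proof.
  intro Hf. rewrite <- (RInt_Chasles f a b c) by (apply Rcont_ex_RInt; auto).
  reflexivity.
Qed.

Lemma RInt_le_R f g a b : a <= b -> Rcont f -> Rcont g ->
  (forall x, a <= x <= b -> f x <= g x) -> RInt f a b <= RInt g a b.
Proof.
  intros Hab Hf Hg H. apply RInt_le; auto; try (apply Rcont_ex_RInt; auto).
  intros; apply H; lra.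
Qed.

Lemma RInt_ge_0_R f a b : a <= b -> Rcont f ->
  (forall x, a <= x <= b -> 0 <= f x) -> 0 <= RInt f a b.
Proof.
  intros Hab Hf H. apply RInt_ge_0; auto. apply Rcont_ex_RInt; auto. intros; apply H; lra.
Qed.

Lemma abs_RInt_le_R f a b : a <= b -> Rcont f ->
  Rabs (RInt f a b) <= RInt (fun t => Rabs (f t)) a b.
Proof. intros. apply abs_RInt_le; auto. apply Rcont_ex_RInt; auto. Qed.

Lemma RInt_scal_R f c a b : Rcont f -> RInt (fun t => c * f t) a b = c * RInt f a b.
Proof.
  intro Hf. pose proof (RInt_scal f a b c (Rcont_ex_RInt f a b Hf)) as E.
  rewrite scal_R' in E. rewrite <- E. reflexivity.
Qed.

Lemma RInt_plus_R f g a b : Rcont f -> Rcont g ->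
  RInt (fun t => f t + g t) a b = RInt f a b + RInt g a b.
Proof.
  intros Hf Hg. pose proof (RInt_plus f g a b (Rcont_ex_RInt f a b Hf) (Rcont_ex_RInt g a b Hg)) as E.
  rewrite plus_R in E. rewrite <- E. reflexivity.
Qed.

Lemma RInt_minus_R f g a b : Rcont f -> Rcont g ->
  RInt (fun t => f t - g t) a b = RInt f a b - RInt g a b.
Proof.
  intros Hf Hg. pose proof (RInt_minus f g a b (Rcont_ex_RInt f a b Hf) (Rcont_ex_RInt g a b Hg)) as E.
  rewrite minus_R in E. rewrite <- E. reflexivity.
Qed.

Lemma RInt_swap_R f a b : Rcont f -> RInt f b a = - RInt f a b.
Proof.
  intro Hf. rewrite <- (opp_RInt_swap f a b) by (apply Rcont_ex_RInt; auto). reflexivity.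
Qed.

Lemma RInt_const_R c a b : RInt (fun _ => c) a b = c * (b - a).
Proof. rewrite RInt_const, scal_R'. apply Rmult_comm. Qed.

(** * The decay kernel n / (1 + n |t|)^p *)

Definition decay (n p : nat) (t : R) : R := INR n / (1 + INR n * Rabs t) ^ p.

Lemma decay_cont n p : Rcont (decay n p).
Proof.
  unfold decay. apply (Rcont_mult (fun _ => INR n) (fun t => / (1 + INR n * Rabs t) ^ p)).
  apply Rcont_const. apply (Rcont_inv (fun t => (1 + INR n * Rabs t) ^ p)).
  apply (Rcont_pow (fun t => 1 + INR n * Rabs t)).
  apply (Rcont_plus (fun _ => 1) (fun t => INR n * Rabs t)). apply Rcont_const.
  apply (Rcont_mult (fun _ => INR n) (fun t => Rabs t)). apply Rcont_const.
  apply (Rcont_abs (fun t => t)). apply Rcont_id.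
  intro t. apply pow_nonzero. pose proof (pos_INR n). pose proof (Rabs_pos t). nra.
Qed.

Lemma RInt_decay_nonneg n q a b : 0 <= a <= b ->
  RInt (decay n (S (S q))) a b =
  (/ (1 + INR n * a) ^ (S q) - / (1 + INR n * b) ^ (S q)) / INR (S q).
Proof.
  intros Hab. pose proof (pos_INR n) as Hn.
  assert (HSq : INR (S q) <> 0) by (apply not_0_INR; lia).
  set (F := fun t => - / INR (S q) * / (1 + INR n * t) ^ (S q)).
  set (df := fun t => INR n / (1 + INR n * t) ^ (S (S q))).
  assert (Hd : forall t, 0 <= t -> is_derive F t (df t)).
  { intros t Ht. assert (Hp : 0 < 1 + INR n * t) by nra.
    assert (Hq : 0 < (1 + INR n * t) ^ q) by (apply pow_lt; lra).
    unfold F, df. auto_derive.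
    - apply Rmult_integral_contrapositive_currified; lra.
    - change (match q with 0%nat => 1 | S _ => INR q + 1 end) with (INR (S q)). change ((1 + INR n * t) ^ S (S q)) with ((1 + INR n * t) * ((1 + INR n * t) * (1 + INR n * t) ^ q)). set (w := (1 + INR n * t) ^ q) in *. set (u := 1 + INR n * t) in *. field. repeat split; try lra; auto. }
  assert (Hc : forall t, 0 <= t -> continuous df t).
  { intros t Ht. unfold df. apply (continuous_mult (fun _ => INR n) (fun t => / (1 + INR n * t) ^ S (S q))).
    apply continuous_const. apply continuous_Rinv_comp.
    - apply (Rcont_pow (fun t => 1 + INR n * t)).
      apply (Rcont_plus (fun _ => 1) (fun t => INR n * t)). apply Rcont_const.
      apply (Rcont_mult (fun _ => INR n) (fun t => t)). apply Rcont_const. apply Rcont_id.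
    - apply pow_nonzero. nra. }
  rewrite (RInt_ext _ df).
  2:{ intros x Hx. rewrite Rmin_left in Hx by lra. rewrite Rmax_right in Hx by lra.
      unfold decay, df. rewrite Rabs_pos_eq by lra. reflexivity. }
  rewrite (is_RInt_unique df a b (minus (F b) (F a))).
  - rewrite minus_R. unfold F. match goal with |- ?a = ?b => change (@eq R a b) end. field. repeat split; auto; apply pow_nonzero; nra.
  - apply (@is_RInt_derive R_CompleteNormedModule).
    + intros x Hx. rewrite Rmin_left in Hx by lra. rewrite Rmax_right in Hx by lra. apply Hd; lra.
    + intros x Hx. rewrite Rmin_left in Hx by lra. rewrite Rmax_right in Hx by lra. apply Hc; lra.
Qed.

Lemma decay_even n p t : decay n p (- t) = decay n p t.
Proof. unfold decay. rewrite Rabs_Ropp. reflexivity. Qed.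

Lemma RInt_even_reflect f a b : Rcont f -> (forall t, f (- t) = f t) ->
  RInt f a b = RInt f (- b) (- a).
Proof.
  intros Hf He.
  pose proof (@RInt_comp_lin R_CompleteNormedModule f (-1) 0 a b (Rcont_ex_RInt _ _ _ Hf)) as E.
  replace (-1 * a + 0) with (- a) in E by ring.
  replace (-1 * b + 0) with (- b) in E by ring.
  erewrite (RInt_ext _ (fun y => -1 * f y)) in E.
  2:{ intros x _. rewrite scal_R'. replace (-1 * x + 0) with (- x) by ring. rewrite He. reflexivity. }
  rewrite (RInt_scal_R f (-1) a b Hf) in E.
  rewrite (RInt_swap_R f (- a) (- b) Hf). rewrite <- E.
  assert (Hneg : forall x : R, x = - (-1 * x)) by (intro; ring). apply Hneg.
Qed.

Lemma RInt_decay_nonpos n q a b : a <= b <= 0 ->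
  RInt (decay n (S (S q))) a b =
  (/ (1 + INR n * Rabs b) ^ (S q) - / (1 + INR n * Rabs a) ^ (S q)) / INR (S q).
Proof.
  intro H. rewrite RInt_even_reflect by (apply decay_cont || apply decay_even).
  rewrite RInt_decay_nonneg by lra. rewrite !Rabs_left1 by lra. reflexivity.
Qed.

Lemma RInt_decay_nonneg_le n q a b : 0 <= a <= b ->
  RInt (decay n (S (S q))) a b <= / (1 + INR n * Rabs a) ^ (S q) / INR (S q).
Proof.
  intro H. rewrite RInt_decay_nonneg by lra. rewrite Rabs_pos_eq by lra.
  pose proof (pos_INR n).
  assert (0 < / (1 + INR n * b) ^ S q) by (apply Rinv_0_lt_compat, pow_lt; nra).
  assert (0 < INR (S q)) by (apply lt_0_INR; lia).
  unfold Rdiv. apply Rmult_le_compat_r. left; apply Rinv_0_lt_compat; lra. lra.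
Qed.

Lemma RInt_decay_nonpos_le n q a b : a <= b <= 0 ->
  RInt (decay n (S (S q))) a b <= / (1 + INR n * Rabs b) ^ (S q) / INR (S q).
Proof.
  intro H. rewrite RInt_decay_nonpos by lra.
  pose proof (pos_INR n). pose proof (Rabs_pos a).
  assert (0 < / (1 + INR n * Rabs a) ^ S q) by (apply Rinv_0_lt_compat, pow_lt; nra).
  assert (0 < INR (S q)) by (apply lt_0_INR; lia).
  unfold Rdiv. apply Rmult_le_compat_r. left; apply Rinv_0_lt_compat; lra. lra.
Qed.

Lemma RInt_decay_le n q : RInt (decay n (S (S q))) (- PI) PI <= 2 / INR (S q).
Proof.
  pose proof PI_RGT_0.
  rewrite <- (RInt_Chasles_R _ (-PI) 0 PI (decay_cont _ _)).
  pose proof (RInt_decay_nonpos_le n q (-PI) 0 ltac:(lra)).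
  pose proof (RInt_decay_nonneg_le n q 0 PI ltac:(lra)).
  rewrite Rabs_R0, Rmult_0_r, Rplus_0_r, pow1, Rinv_1 in *. lra.
Qed.

(** * The normalising constant of the Jackson kernel *)

Lemma fejer_cont n : Rcont (fejer n).
Proof. intro z. apply (TrigPoly_continuous _ _ (TrigPoly_fejer n)). Qed.

Lemma fejer_pow_cont n l : Rcont (fun t => fejer n t ^ l).
Proof. apply (Rcont_pow (fejer n)). apply fejer_cont. Qed.

Lemma J_ln_fejer l n t : J_ln l n t = fejer n t ^ l / gamma_ln l n.
Proof. unfold J_ln. rewrite Dn_pow_mult2. reflexivity. Qed.

Lemma gamma_ln_fejer l n : gamma_ln l n = RInt (fun t => fejer n t ^ l) (- PI) PI.
Proof. unfold gamma_ln. apply RInt_ext. intros. apply Dn_pow_mult2. Qed.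

Lemma fejer_ge_near0 n t : (1 <= n)%nat -> Rabs t <= / INR n -> (2 * INR n / PI) ^ 2 <= fejer n t.
Proof.
  intros Hn Ht. pose proof PI_gt_3 as HP.
  assert (Hn' : 1 <= INR n) by (apply (le_INR 1); lia).
  pose proof (sin_half_sqr_mul_fejer n t) as E.
  assert (H1 : Rabs (INR n * t) <= PI).
  { rewrite Rabs_mult, Rabs_pos_eq by lra.
    apply Rle_trans with (INR n * / INR n). apply Rmult_le_compat_l; lra.
    rewrite Rinv_r by lra. lra. }
  pose proof (sin_half_abs_ge _ H1) as L.
  replace (INR n * t / 2) with ((INR n * t)/2) in E by reflexivity.
  pose proof (Rabs_sin_le (t/2)) as U.
  rewrite Rabs_mult, (Rabs_pos_eq (INR n)) in L by lra.
  assert (Hs2 : sin (t/2) ^ 2 <= (t/2)^2).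
  { rewrite <- (pow2_abs (sin (t/2))), <- (pow2_abs (t/2)). apply pow_incr. split; auto. apply Rabs_pos. }
  assert (Hm2 : (INR n * Rabs t / PI) ^ 2 <= sin (INR n * t / 2) ^ 2).
  { rewrite <- (pow2_abs (sin _)). apply pow_incr. split; auto.
    apply Rmult_le_pos; [apply Rmult_le_pos; [lra|apply Rabs_pos]|left; apply Rinv_0_lt_compat; lra]. }
  destruct (Req_dec t 0) as [Z|Z].
  - subst t. rewrite fejer_sin_half_eq0. 2:{ replace (0/2) with 0 by field. apply sin_0. }
    assert (2 / PI <= 1) by (apply (Rmult_le_reg_r PI); [lra|]; field_simplify; lra).
    replace (2 * INR n / PI) with (INR n * (2 / PI)) by (field; lra).
    rewrite Rpow_mult_distr. assert (0 <= 2/PI) by (unfold Rdiv; apply Rmult_le_pos; [lra|left; apply Rinv_0_lt_compat; lra]).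
    assert ((2/PI)^2 <= 1) by nra. assert (0 <= INR n ^ 2) by (apply pow_le; lra). nra.
  - assert (Ht2 : 0 < t ^ 2) by (apply pow2_gt_0; auto).
    pose proof (fejer_ge0 n t).
    rewrite <- (pow2_abs t) in Ht2.
    replace ((INR n * Rabs t / PI) ^ 2) with ((2 * INR n / PI) ^ 2 * ((Rabs t)^2 / 4)) in Hm2 by (field; lra).
    replace ((t/2)^2) with ((Rabs t)^2/4) in Hs2 by (rewrite <- (pow2_abs (t/2)); unfold Rdiv; rewrite Rabs_mult, Rabs_inv, (Rabs_pos_eq 2) by lra; field).
    assert (0 < Rabs t ^ 2 / 4) by lra.
    nra.
Qed.

Lemma fejer_mul_weight_le n t : Rabs t <= PI -> fejer n t * (1 + INR n * Rabs t) ^ 2 <= (2 * PI * INR n) ^ 2.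
Proof.
  intro Ht. pose proof PI_gt_3 as HP. pose proof (pos_INR n) as Hn.
  pose proof (fejer_le_sqr n t). pose proof (fejer_ge0 n t).
  pose proof (sin_half_sqr_mul_fejer n t) as E.
  pose proof (sin_half_abs_ge t Ht) as L.
  assert (Hs : (Rabs t / PI) ^ 2 <= sin (t/2) ^ 2).
  { rewrite <- (pow2_abs (sin _)). apply pow_incr. split; auto.
    unfold Rdiv; apply Rmult_le_pos; [apply Rabs_pos|left; apply Rinv_0_lt_compat; lra]. }
  assert (Hs1 : sin (INR n * t / 2) ^ 2 <= 1).
  { pose proof (SIN_bound (INR n * t / 2)). nra. }
  assert (Ht2 : fejer n t * Rabs t ^ 2 <= PI ^ 2).
  { replace ((Rabs t / PI)^2) with (Rabs t ^ 2 / PI ^ 2) in Hs by (field; lra).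
    assert (fejer n t * (Rabs t ^ 2 / PI ^ 2) <= 1) by nra.
    assert (0 < PI ^ 2) by nra.
    replace (fejer n t * Rabs t ^ 2) with (fejer n t * (Rabs t ^ 2 / PI ^ 2) * PI ^ 2) by (field; lra).
    nra. }
  assert ((1 + INR n * Rabs t) ^ 2 <= 2 * (1 + INR n ^ 2 * Rabs t ^ 2)).
  { assert (0 <= (1 - INR n * Rabs t)^2) by apply pow2_ge_0. nra. }
  assert (fejer n t * (1 + INR n * Rabs t) ^ 2 <= 2 * (fejer n t + INR n ^ 2 * (fejer n t * Rabs t ^ 2))).
  { replace (2 * (fejer n t + INR n ^ 2 * (fejer n t * Rabs t ^ 2))) with (fejer n t * (2 * (1 + INR n ^ 2 * Rabs t ^ 2))) by ring.
    apply Rmult_le_compat_l; auto. }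
  assert (INR n ^ 2 * (fejer n t * Rabs t ^ 2) <= INR n ^ 2 * PI ^ 2) by (apply Rmult_le_compat_l; [apply pow_le|]; lra).
  replace ((2 * PI * INR n)^2) with (4 * (INR n^2 * PI^2)) by ring.
  assert (INR n ^ 2 <= INR n^2 * PI^2) by (rewrite <- (Rmult_1_r (INR n ^ 2)) at 1; apply Rmult_le_compat_l; [apply pow_le; lra| nra]).
  lra.
Qed.

Lemma gamma_ln_ge l n : (1 <= n)%nat ->
  (2 / INR n) * (2 * INR n / PI) ^ (2 * l) <= gamma_ln l n.
Proof.
  intro Hn. pose proof PI_gt_3 as HP.
  assert (Hn' : 1 <= INR n) by (apply (le_INR 1); lia).
  assert (Hi : 0 < / INR n <= 1).
  { split. apply Rinv_0_lt_compat; lra. rewrite <- Rinv_1. apply Rinv_le_contravar; lra. }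
  rewrite gamma_ln_fejer.
  set (f := fun t => fejer n t ^ l).
  assert (Hf : Rcont f) by apply fejer_pow_cont.
  assert (Hpos : forall t, 0 <= f t) by (intro; apply pow_le, fejer_ge0).
  rewrite <- (RInt_Chasles_R f (-PI) (- / INR n) PI Hf).
  rewrite <- (RInt_Chasles_R f (- / INR n) (/ INR n) PI Hf).
  assert (A1 : 0 <= RInt f (-PI) (- / INR n)) by (apply RInt_ge_0_R; auto; lra).
  assert (A2 : 0 <= RInt f (/ INR n) PI) by (apply RInt_ge_0_R; auto; lra).
  assert (A3 : RInt (fun _ => (2 * INR n / PI) ^ (2 * l)) (- / INR n) (/ INR n)
               <= RInt f (- / INR n) (/ INR n)).
  { apply RInt_le_R; auto. lra. apply Rcont_const.
    intros x Hx. unfold f. rewrite pow_mult. apply pow_incr. split.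
    apply pow_le. apply Rmult_le_pos; [lra| left; apply Rinv_0_lt_compat; lra].
    apply fejer_ge_near0; auto. apply Rabs_le; lra. }
  rewrite RInt_const_R in A3.
  replace (/ INR n - - / INR n) with (2 / INR n) in A3 by (field; lra).
  lra.
Qed.

Lemma gamma_ln_pos l n : (1 <= n)%nat -> 0 < gamma_ln l n.
Proof.
  intro Hn. eapply Rlt_le_trans; [|apply gamma_ln_ge; auto].
  assert (Hn' : 1 <= INR n) by (apply (le_INR 1); lia). pose proof PI_gt_3.
  apply Rmult_lt_0_compat. unfold Rdiv; apply Rmult_lt_0_compat; [lra|apply Rinv_0_lt_compat; lra].
  apply pow_lt. unfold Rdiv; apply Rmult_lt_0_compat; [lra|apply Rinv_0_lt_compat; lra].
Qed.

Lemma fejer_pow_le_decay l n t : (1 <= n)%nat -> Rabs t <= PI ->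
  fejer n t ^ l <= (2 * PI) ^ (2 * l) * INR n ^ (2 * l - 1) * decay n (2 * l) t.
Proof.
  intros Hn Ht. assert (Hn' : 1 <= INR n) by (apply (le_INR 1); lia).
  pose proof (Rabs_pos t). pose proof PI_gt_3.
  assert (Hq : 0 < (1 + INR n * Rabs t) ^ 2) by (apply pow_lt; nra).
  pose proof (fejer_mul_weight_le n t Ht) as U.
  assert (U2 : fejer n t <= (2 * PI * INR n) ^ 2 / (1 + INR n * Rabs t) ^ 2).
  { apply (Rmult_le_reg_r ((1 + INR n * Rabs t) ^ 2)); auto. unfold Rdiv. rewrite Rmult_assoc, Rinv_l, Rmult_1_r by lra. exact U. }
  apply Rle_trans with (((2 * PI * INR n) ^ 2 / (1 + INR n * Rabs t) ^ 2) ^ l).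
  { apply pow_incr. split; auto. apply fejer_ge0. }
  unfold decay. destruct l as [|l].
  - simpl. lra.
  - set (b := 1 + INR n * Rabs t) in *. set (m := (2 * S l)%nat).
    assert (E1 : ((2 * PI * INR n) ^ 2 / b ^ 2) ^ S l = (2 * PI) ^ m * INR n ^ m * / b ^ m).
    { unfold Rdiv. rewrite Rpow_mult_distr, pow_inv, <- !pow_mult, Rpow_mult_distr. reflexivity. }
    assert (E2 : INR n ^ (m - 1) * INR n = INR n ^ m).
    { unfold m. replace (2 * S l)%nat with (S (S (2 * l))) by lia.
      replace (S (S (2 * l)) - 1)%nat with (S (2 * l)) by lia. simpl. ring. }
    rewrite E1. unfold Rdiv. rewrite <- E2. right. ring.
Qed.

Lemma gamma_ln_le l n : (1 <= n)%nat -> (1 <= l)%nat ->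
  gamma_ln l n <= (2 * PI) ^ (2 * l) * INR n ^ (2 * l - 1) * (2 / INR (2 * l - 1)).
Proof.
  intros Hn Hl. pose proof PI_gt_3.
  set (c := (2 * PI) ^ (2 * l) * INR n ^ (2 * l - 1)).
  assert (Hc : 0 <= c).
  { unfold c. apply Rmult_le_pos; apply pow_le; [lra|apply pos_INR]. }
  rewrite gamma_ln_fejer.
  apply Rle_trans with (RInt (fun t => c * decay n (2 * l) t) (- PI) PI).
  { apply RInt_le_R. lra. apply fejer_pow_cont. apply (Rcont_mult (fun _ => c)). apply Rcont_const. apply decay_cont.
    intros x Hx. apply fejer_pow_le_decay; auto. apply Rabs_le; lra. }
  rewrite RInt_scal_R by apply decay_cont.
  apply Rmult_le_compat_l; auto.
  replace (2 * l)%nat with (S (S (2 * l - 2))) by lia.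
  replace (2 * l - 1)%nat with (S (2 * l - 2)) by lia.
  apply RInt_decay_le.
Qed.

Lemma J_ln_cont l n : Rcont (J_ln l n).
Proof.
  apply (Rcont_ext (fun t => fejer n t ^ l * / gamma_ln l n)).
  apply (Rcont_mult (fun t => fejer n t ^ l)). apply fejer_pow_cont. apply Rcont_const.
  intro t. rewrite J_ln_fejer. reflexivity.
Qed.

Lemma J_ln_ge0 l n t : (1 <= n)%nat -> 0 <= J_ln l n t.
Proof.
  intro Hn. rewrite J_ln_fejer. unfold Rdiv. apply Rmult_le_pos. apply pow_le, fejer_ge0.
  left. apply Rinv_0_lt_compat, gamma_ln_pos; auto.
Qed.

Lemma RInt_J_ln l n : (1 <= n)%nat -> RInt (J_ln l n) (- PI) PI = 1.
Proof.
  intro Hn. pose proof (gamma_ln_pos l n Hn).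
  rewrite (RInt_ext _ (fun t => / gamma_ln l n * (fejer n t ^ l))).
  2:{ intros. rewrite J_ln_fejer. unfold Rdiv. apply Rmult_comm. }
  rewrite RInt_scal_R by apply fejer_pow_cont. rewrite <- gamma_ln_fejer. apply Rinv_l. lra.
Qed.

(** * The ratio Pi(t + xs) / Pi(xs) *)

Lemma prodR_div (f g : nat -> R) m : (forall j, (1 <= j <= m)%nat -> g j <> 0) ->
  prodR f m / prodR g m = prodR (fun j => f j / g j) m.
Proof.
  induction m as [|m IH]; intro H.
  - simpl. field.
  - simpl. rewrite <- IH by (intros; apply H; lia).
    assert (g (S m) <> 0) by (apply H; lia).
    assert (prodR g m <> 0).
    { clear IH. induction m as [|m IHm]. simpl; lra.
      simpl. apply Rmult_integral_contrapositive_currified.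
      apply IHm. intros; apply H; lia. apply H; lia. apply H; lia. }
    field. split; auto.
Qed.

Lemma Rabs_prodR_le (c : R) (e : nat -> R) (E : R) m :
  (forall j, (1 <= j <= m)%nat -> Rabs (e j) <= E) ->
  Rabs (prodR (fun j => c + e j) m) <= (Rabs c + E) ^ m.
Proof.
  induction m as [|m IH]; intro H.
  - simpl. rewrite Rabs_R1. lra.
  - simpl. rewrite Rabs_mult.
    assert (A : Rabs (c + e (S m)) <= Rabs c + E).
    { eapply Rle_trans. apply Rabs_triang. pose proof (H (S m) ltac:(lia)). lra. }
    rewrite Rmult_comm. apply Rmult_le_compat; try apply Rabs_pos; auto.
    apply IH. intros; apply H; lia.
Qed.

Lemma Rabs_prodR_sub_pow_le (c : R) (e : nat -> R) (E : R) m : Rabs c <= 1 ->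
  (forall j, (1 <= j <= m)%nat -> Rabs (e j) <= E) ->
  Rabs (prodR (fun j => c + e j) m - c ^ m) <= (1 + E) ^ m - 1.
Proof.
  intros Hc. induction m as [|m IH]; intro H.
  - simpl. rewrite Rminus_diag, Rabs_R0. lra.
  - assert (HE : 0 <= E) by (pose proof (H 1%nat ltac:(lia)); pose proof (Rabs_pos (e 1%nat)); lra).
    simpl prodR. simpl pow.
    replace (prodR (fun j => c + e j) m * (c + e (S m)) - c * c ^ m)
      with ((prodR (fun j => c + e j) m - c ^ m) * (c + e (S m)) + c ^ m * e (S m)) by ring.
    eapply Rle_trans. apply Rabs_triang. rewrite !Rabs_mult.
    pose proof (IH ltac:(intros; apply H; lia)) as I.
    assert (A : Rabs (c + e (S m)) <= 1 + E).
    { eapply Rle_trans. apply Rabs_triang. pose proof (H (S m) ltac:(lia)). lra. }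
    assert (B : Rabs (c ^ m) <= 1).
    { rewrite <- RPow_abs. rewrite <- (pow1 m). apply pow_incr. split; auto. apply Rabs_pos. }
    pose proof (H (S m) ltac:(lia)).
    assert (Rabs (prodR (fun j => c + e j) m - c ^ m) * Rabs (c + e (S m)) <= ((1 + E) ^ m - 1) * (1 + E)).
    { apply Rmult_le_compat; try apply Rabs_pos; auto. }
    assert (Rabs (c ^ m) * Rabs (e (S m)) <= 1 * E).
    { apply Rmult_le_compat; try apply Rabs_pos; auto. }
    lra.
Qed.

Lemma pow_succ2_sub_linear_le (E : R) m : 0 <= E ->
  (1 + E) ^ (S (S m)) - 1 - INR (S (S m)) * E <= INR (S (S m)) ^ 2 * E ^ 2 * (1 + E) ^ m.
Proof.
  intro HE. induction m as [|m IH].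
  - simpl. assert (0 <= E * E) by nra. nra.
  - assert (H1 : 1 <= (1 + E) ^ m) by (apply Rle_trans with (1 ^ m); [rewrite pow1; lra| apply pow_incr; lra]).
    replace ((1 + E) ^ S (S (S m)) - 1 - INR (S (S (S m))) * E)
      with ((1 + E) * ((1 + E) ^ S (S m) - 1 - INR (S (S m)) * E) + INR (S (S m)) * E ^ 2)
      by (rewrite !S_INR; simpl; ring).
    set (k := INR (S (S m))) in *.
    assert (Hk : INR (S (S (S m))) = k + 1) by (unfold k; rewrite S_INR; reflexivity).
    rewrite Hk.
    assert (Hk0 : 0 <= k) by (unfold k; apply pos_INR).
    assert (Hk1 : 1 <= k) by (unfold k; apply (le_INR 1); lia).
    replace ((1 + E) ^ S m) with ((1 + E) * (1 + E) ^ m) by reflexivity.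
    assert (0 <= E ^ 2) by apply pow2_ge_0.
    assert ((1 + E) * ((1 + E) ^ S (S m) - 1 - k * E) <= (1 + E) * (k ^ 2 * E ^ 2 * (1 + E) ^ m)).
    { apply Rmult_le_compat_l; lra. }
    assert (k * E ^ 2 <= (2 * k + 1) * E ^ 2 * ((1 + E) * (1 + E) ^ m)).
    { assert (H2 : 1 <= (1 + E) * (1 + E) ^ m).
      { rewrite <- (Rmult_1_l 1) at 1. apply Rmult_le_compat; lra. }
      assert (0 <= (2 * k + 1) * E ^ 2) by nra.
      apply Rle_trans with ((2 * k + 1) * E ^ 2 * 1). nra.
      apply Rmult_le_compat_l; lra. }
    replace ((k + 1) ^ 2 * E ^ 2 * ((1 + E) * (1 + E) ^ m))
      with ((1 + E) * (k ^ 2 * E ^ 2 * (1 + E) ^ m) + (2 * k + 1) * E ^ 2 * ((1 + E) * (1 + E) ^ m)) by ring.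
    lra.
Qed.

Lemma one_sub_pow_le (c : R) m : 0 <= c <= 1 -> 1 - c ^ m <= INR m * (1 - c).
Proof.
  intro Hc. induction m as [|m IH].
  - simpl. lra.
  - rewrite S_INR. simpl.
    assert (0 <= c ^ m <= 1) by (split; [apply pow_le; lra|rewrite <- (pow1 m); apply pow_incr; lra]).
    nra.
Qed.

Lemma pow_sub1_le (E z : R) (q : nat) : 0 <= E -> INR (S (S q)) * E <= z ->
  (1 + E) ^ S (S q) - 1 <= z + z ^ 2 * (1 + z) ^ q.
Proof.
  intros HE Hz. pose proof (pow_succ2_sub_linear_le E q HE) as BR.
  assert (Hk : 2 <= INR (S (S q))) by (rewrite !S_INR; pose proof (pos_INR q); lra).
  assert (HEz : E <= z) by nra.
  assert (Hsq : INR (S (S q)) ^ 2 * E ^ 2 <= z ^ 2).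
  { rewrite <- Rpow_mult_distr. apply pow_incr. nra. }
  assert (Hpow : (1 + E) ^ q <= (1 + z) ^ q) by (apply pow_incr; lra).
  assert (0 <= (1 + E) ^ q) by (apply pow_le; lra).
  assert (0 <= INR (S (S q)) ^ 2 * E ^ 2) by (apply Rmult_le_pos; apply pow2_ge_0).
  assert (INR (S (S q)) ^ 2 * E ^ 2 * (1 + E) ^ q <= z ^ 2 * (1 + z) ^ q)
    by (apply Rmult_le_compat; auto).
  lra.
Qed.

Lemma sqr_mul_pow_le_pow_S2 (x : R) (q : nat) : 0 <= x ->
  x ^ 2 * (1 + x) ^ q <= (1 + x) ^ S (S q).
Proof.
  intro Hx. assert (0 <= (1 + x) ^ q) by (apply pow_le; lra).
  change ((1 + x) ^ S (S q)) with ((1 + x) * ((1 + x) * (1 + x) ^ q)).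
  rewrite <- Rmult_assoc. apply Rmult_le_compat_r; auto. simpl. nra.
Qed.

Definition cot_bound (s n : nat) (C12 : R) := INR n / (2 * INR s * C12).
Definition cotY (y : nat -> R) (xs : R) (j : nat) := cos ((xs - y j)/2) / sin ((xs - y j)/2).
Definition ratioPi s y xs t := PiY s y (t + xs) / PiY s y xs.

Lemma prodR_ext (f g : nat -> R) m : (forall j, (1 <= j <= m)%nat -> f j = g j) ->
  prodR f m = prodR g m.
Proof.
  induction m as [|m IH]; intro H; simpl; auto.
  rewrite IH by (intros; apply H; lia). rewrite H by lia. reflexivity.
Qed.

Section Ratio.
Variables (s n : nat) (C12 : R) (y : nat -> R) (xs : R).
Hypothesis Hs : (1 <= s)%nat.
Hypothesis Hn : (1 <= n)%nat.
Hypothesis HC : 1 <= C12.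
Hypothesis HnC : 2 * INR s * C12 <= INR n.
Hypothesis Hsin : forall j, (1 <= j <= 2 * s)%nat -> 2 * INR s * C12 / INR n <= Rabs (sin ((xs - y j) / 2)).

Lemma ratio_params_pos : 1 <= INR s /\ 1 <= INR n /\ 0 < 2 * INR s * C12 / INR n.
Proof.
  assert (1 <= INR s) by (apply (le_INR 1); lia).
  assert (1 <= INR n) by (apply (le_INR 1); lia).
  split; auto. split; auto. unfold Rdiv. apply Rmult_lt_0_compat. nra. apply Rinv_0_lt_compat; lra.
Qed.

Lemma sin_half_Y_neq0 j : (1 <= j <= 2 * s)%nat -> sin ((xs - y j) / 2) <> 0.
Proof.
  intros Hj E. pose proof (Hsin j Hj). rewrite E, Rabs_R0 in H. pose proof ratio_params_pos. lra.
Qed.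

Lemma PiY_neq0 : PiY s y xs <> 0.
Proof.
  unfold PiY. assert (forall m, (m <= 2 * s)%nat -> prodR (fun i => sin ((xs - y i) / 2)) m <> 0).
  { induction m as [|m IH]; intro Hm; simpl. lra.
    apply Rmult_integral_contrapositive_currified. apply IH; lia. apply sin_half_Y_neq0; lia. }
  apply H; lia.
Qed.

Lemma ratioPi_prodR t : ratioPi s y xs t =
  prodR (fun j => cos (t/2) + cotY y xs j * sin (t/2)) (2 * s).
Proof.
  unfold ratioPi, PiY. rewrite prodR_div by (intros; apply sin_half_Y_neq0; auto).
  apply prodR_ext. intros j Hj. pose proof (sin_half_Y_neq0 j Hj). unfold cotY.
  replace ((t + xs - y j) / 2) with (t/2 + (xs - y j)/2) by field.
  rewrite sin_plus. field. auto.
Qed.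

Lemma Rabs_cotY_le j : (1 <= j <= 2 * s)%nat -> Rabs (cotY y xs j) <= cot_bound s n C12.
Proof.
  intro Hj. pose proof (Hsin j Hj). pose proof (sin_half_Y_neq0 j Hj). pose proof ratio_params_pos as [A [B C]].
  unfold cotY, cot_bound. unfold Rdiv. rewrite Rabs_mult, Rabs_inv.
  pose proof (COS_bound ((xs - y j)/2)).
  assert (Rabs (cos ((xs - y j) / 2)) <= 1) by (apply Rabs_le; lra).
  assert (P : 0 < Rabs (sin ((xs - y j) / 2))) by (apply Rabs_pos_lt; auto).
  apply Rle_trans with (1 * / Rabs (sin ((xs - y j) / 2))).
  { apply Rmult_le_compat_r; [left; apply Rinv_0_lt_compat|]; lra. }
  rewrite Rmult_1_l.
  replace (INR n * / (2 * INR s * C12)) with (/ (2 * INR s * C12 / INR n)) by (field; split; lra).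
  apply Rinv_le_contravar; auto.
Qed.

Lemma cot_bound_ge0 : 0 <= cot_bound s n C12.
Proof. pose proof ratio_params_pos as [A [B C]]. unfold cot_bound. unfold Rdiv. apply Rmult_le_pos. lra. left; apply Rinv_0_lt_compat. nra. Qed.

Lemma Rabs_ratioPi_le t : Rabs (ratioPi s y xs t) <= (1 + cot_bound s n C12 * Rabs (sin (t/2))) ^ (2 * s).
Proof.
  rewrite ratioPi_prodR.
  eapply Rle_trans. apply (Rabs_prodR_le (cos (t/2)) (fun j => cotY y xs j * sin (t/2)) (cot_bound s n C12 * Rabs (sin (t/2)))).
  - intros j Hj. rewrite Rabs_mult. apply Rmult_le_compat_r. apply Rabs_pos. apply Rabs_cotY_le; auto.
  - apply pow_incr. split. apply Rplus_le_le_0_compat. apply Rabs_pos. apply Rmult_le_pos. apply cot_bound_ge0. apply Rabs_pos.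
    pose proof (COS_bound (t/2)). assert (Rabs (cos (t/2)) <= 1) by (apply Rabs_le; lra). lra.
Qed.

Lemma cos_sin_half_facts t : Rabs t <= PI ->
  0 <= cos (t/2) <= 1 /\ Rabs (sin (t/2)) <= Rabs t / 2 /\
  cos (t/2) ^ 2 + Rabs (sin (t/2)) ^ 2 = 1.
Proof.
  intro Ht. pose proof PI_gt_3.
  assert (Htt : - PI <= t <= PI) by (apply Rabs_le_between; lra).
  split; [|split].
  - split. apply cos_ge_0; lra. pose proof (COS_bound (t/2)); lra.
  - eapply Rle_trans. apply Rabs_sin_le.
    unfold Rdiv. rewrite Rabs_mult, Rabs_inv, (Rabs_pos_eq 2) by lra. lra.
  - rewrite pow2_abs. pose proof (sin2_cos2 (t/2)). unfold Rsqr in *. simpl. lra.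
Qed.

Lemma Rabs_ratioPi_sub_cos_pow_le t : Rabs t <= PI ->
  Rabs (ratioPi s y xs t - cos (t/2) ^ (2 * s))
    <= INR n * Rabs t / (2 * C12) + (1 + INR n * Rabs t) ^ (2 * s) / (4 * C12 ^ 2).
Proof.
  intro Ht. pose proof ratio_params_pos as [Hs1 [Hn1 _]].
  destruct (cos_sin_half_facts t Ht) as [Hc [Hu _]].
  set (u := Rabs (sin (t/2))) in *. set (x := INR n * Rabs t).
  set (E := cot_bound s n C12 * u).
  assert (Hx : 0 <= x) by (unfold x; apply Rmult_le_pos; [lra|apply Rabs_pos]).
  assert (HE : 0 <= E) by (unfold E; apply Rmult_le_pos; [apply cot_bound_ge0|apply Rabs_pos]).
  assert (HkE : INR (2 * s) * E <= x / (2 * C12)).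
  { assert (L : INR (2 * s) * E = INR n * u / C12).
    { unfold E, cot_bound. rewrite mult_INR. change (INR 2) with (1 + 1). field. split; lra. }
    rewrite L. unfold x. unfold Rdiv.
    apply (Rmult_le_reg_r C12); [lra|]. field_simplify; [|lra|lra]. nra. }
  assert (P : Rabs (ratioPi s y xs t - cos (t/2) ^ (2 * s)) <= (1 + E) ^ (2 * s) - 1).
  { rewrite ratioPi_prodR. apply Rabs_prodR_sub_pow_le. apply Rabs_le; lra.
    intros j Hj. rewrite Rabs_mult. apply Rmult_le_compat_r. apply Rabs_pos. apply Rabs_cotY_le; auto. }
  destruct s as [|q]; [lia|].
  replace (2 * S q)%nat with (S (S (2 * q))) in * by lia.
  set (z := x / (2 * C12)) in *.
  assert (Hz : 0 <= z <= x).
  { unfold z. split. unfold Rdiv; apply Rmult_le_pos; [lra|left; apply Rinv_0_lt_compat; lra].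
    apply (Rmult_le_reg_r (2 * C12)); [lra|]. unfold Rdiv. rewrite Rmult_assoc, Rinv_l by lra. nra. }
  assert (Hz2 : z ^ 2 * (1 + z) ^ (2 * q) <= (1 + x) ^ S (S (2 * q)) / (4 * C12 ^ 2)).
  { replace (z ^ 2) with (x ^ 2 / (4 * C12 ^ 2)) by (unfold z; field; lra).
    unfold Rdiv. rewrite Rmult_comm, <- Rmult_assoc.
    apply Rmult_le_compat_r; [left; apply Rinv_0_lt_compat; nra|].
    rewrite Rmult_comm. eapply Rle_trans; [|apply sqr_mul_pow_le_pow_S2; lra].
    apply Rmult_le_compat_l; [apply pow2_ge_0|apply pow_incr; lra]. }
  pose proof (pow_sub1_le E z (2 * q) HE HkE). lra.
Qed.

Lemma Rabs_cos_pow_sub1_le t : Rabs t <= PI ->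
  Rabs (cos (t/2) ^ (2 * s) - 1) <= (1 + INR n * Rabs t) ^ (2 * s) / (8 * C12 ^ 2).
Proof.
  intro Ht. pose proof ratio_params_pos as [Hs1 [Hn1 _]].
  destruct (cos_sin_half_facts t Ht) as [Hc [Hu Hcu]].
  set (c := cos (t/2)) in *. set (u := Rabs (sin (t/2))) in *. set (x := INR n * Rabs t).
  assert (Hu0 : 0 <= u) by apply Rabs_pos.
  assert (Hm : 2 <= INR (2 * s)) by (rewrite mult_INR; change (INR 2) with 2; lra).
  assert (Hcm : c ^ (2 * s) <= 1) by (rewrite <- (pow1 (2 * s)); apply pow_incr; lra).
  rewrite Rabs_minus_sym, Rabs_pos_eq by lra.
  assert (Hbern : 1 - c ^ (2 * s) <= INR (2 * s) * u ^ 2).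
  { eapply Rle_trans. apply one_sub_pow_le; auto. apply Rmult_le_compat_l. apply pos_INR. nra. }
  assert (Hmu : INR (2 * s) * u ^ 2 <= x ^ 2 / (8 * C12 ^ 2)).
  { assert (HmC : INR (2 * s) * C12 <= INR n) by (rewrite mult_INR; change (INR 2) with 2; lra).
    assert (Hu2 : u ^ 2 <= Rabs t ^ 2 / 4).
    { replace (Rabs t ^ 2 / 4) with ((Rabs t / 2) ^ 2) by field. apply pow_incr; lra. }
    apply (Rmult_le_reg_r (8 * C12 ^ 2)); [nra|].
    replace (x ^ 2 / (8 * C12 ^ 2) * (8 * C12 ^ 2)) with (INR n ^ 2 * Rabs t ^ 2) by (unfold x; field; lra).
    assert (0 <= Rabs t ^ 2) by apply pow2_ge_0.
    assert ((INR (2 * s) * C12) ^ 2 <= INR n ^ 2) by (apply pow_incr; split; [nra|lra]).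
    nra. }
  assert (Hx2 : x ^ 2 <= (1 + x) ^ (2 * s)).
  { assert (Hx : 0 <= x) by (unfold x; apply Rmult_le_pos; [lra|apply Rabs_pos]).
    destruct s as [|q]; [lia|]. replace (2 * S q)%nat with (S (S (2 * q))) by lia.
    eapply Rle_trans; [|apply sqr_mul_pow_le_pow_S2; lra].
    rewrite <- (Rmult_1_r (x ^ 2)) at 1. apply Rmult_le_compat_l. apply pow2_ge_0.
    apply pow_R1_Rle; lra. }
  assert (x ^ 2 / (8 * C12 ^ 2) <= (1 + x) ^ (2 * s) / (8 * C12 ^ 2)).
  { unfold Rdiv. apply Rmult_le_compat_r; [left; apply Rinv_0_lt_compat; nra|lra]. }
  lra.
Qed.

Lemma Rabs_ratioPi_sub1_le t : Rabs t <= PI ->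
  Rabs (ratioPi s y xs t - 1) <= INR n * Rabs t / (2 * C12)
     + 3 / 8 * (1 + INR n * Rabs t) ^ (2 * s) / C12 ^ 2.
Proof.
  intro Ht.
  replace (ratioPi s y xs t - 1)
    with ((ratioPi s y xs t - cos (t/2) ^ (2 * s)) + (cos (t/2) ^ (2 * s) - 1)) by ring.
  eapply Rle_trans. apply Rabs_triang.
  pose proof (Rabs_ratioPi_sub_cos_pow_le t Ht). pose proof (Rabs_cos_pow_sub1_le t Ht).
  assert (3 / 8 * (1 + INR n * Rabs t) ^ (2 * s) / C12 ^ 2 =
          (1 + INR n * Rabs t) ^ (2 * s) / (4 * C12 ^ 2) + (1 + INR n * Rabs t) ^ (2 * s) / (8 * C12 ^ 2))
    by (field; lra).
  lra.
Qed.

End Ratio.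

Lemma PiY_cont s y : Rcont (PiY s y).
Proof. intro z. apply (TrigPoly_continuous _ _ (TrigPoly_PiY s y)). Qed.

Lemma ratioPi_cont s y xs : Rcont (ratioPi s y xs).
Proof.
  unfold ratioPi. apply (Rcont_mult (fun t => PiY s y (t + xs)) (fun _ => / PiY s y xs)).
  apply (Rcont_shift (PiY s y)). apply PiY_cont. apply Rcont_const.
Qed.

Definition dlt (n : nat) (t : R) : R :=
  if Req_EM_T (sin (t / 2)) 0 then 1
  else Rmin 1 (/ (INR n * Rabs (sin (t / 2)))).

Lemma delta_n_dlt n x xs : delta_n n x xs = dlt n (x - xs).
Proof. reflexivity. Qed.

Section DL.
Variable n : nat.
Hypothesis Hn : (1 <= n)%nat.

Lemma INRn_ge1 : 1 <= INR n.
Proof. apply (le_INR 1); lia. Qed.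

Lemma dlt_pos t : 0 < dlt n t <= 1.
Proof.
  pose proof INRn_ge1. unfold dlt. destruct (Req_EM_T _ _) as [E|E]. lra.
  assert (0 < Rabs (sin (t/2))) by (apply Rabs_pos_lt; auto).
  split. apply Rmin_glb_lt. lra. apply Rinv_0_lt_compat. nra. apply Rmin_l.
Qed.

Lemma dlt_ge t : / (1 + INR n * Rabs t) <= dlt n t.
Proof.
  pose proof INRn_ge1. pose proof (Rabs_pos t).
  assert (P : 0 < 1 + INR n * Rabs t) by nra.
  unfold dlt. destruct (Req_EM_T _ _) as [E|E].
  - rewrite <- Rinv_1. apply Rinv_le_contravar. lra. nra.
  - assert (0 < Rabs (sin (t/2))) by (apply Rabs_pos_lt; auto).
    apply Rmin_glb.
    + rewrite <- Rinv_1. apply Rinv_le_contravar. lra. nra.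
    + apply Rinv_le_contravar. nra.
      pose proof (Rabs_sin_le (t/2)). unfold Rdiv in H2. rewrite Rabs_mult, Rabs_inv, (Rabs_pos_eq 2) in H2 by lra.
      nra.
Qed.

Lemma dlt_le t : Rabs t <= PI -> dlt n t <= (1 + PI) / (1 + INR n * Rabs t).
Proof.
  intro Ht. pose proof INRn_ge1. pose proof (Rabs_pos t). pose proof PI_gt_3.
  assert (P : 0 < 1 + INR n * Rabs t) by nra.
  pose proof (dlt_pos t) as [D0 D1].
  apply (Rmult_le_reg_r (1 + INR n * Rabs t)); auto.
  replace ((1 + PI) / (1 + INR n * Rabs t) * (1 + INR n * Rabs t)) with (1 + PI) by (field; lra).
  rewrite Rmult_plus_distr_l, Rmult_1_r.
  assert (dlt n t * (INR n * Rabs t) <= PI).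
  { unfold dlt in *. destruct (Req_EM_T _ _) as [E|E].
    - pose proof (sin_half_abs_ge t Ht). rewrite E, Rabs_R0 in H2.
      assert (Rabs t <= 0). { apply (Rmult_le_reg_r (/ PI)). apply Rinv_0_lt_compat; lra. lra. }
      assert (Rabs t = 0) by lra. rewrite H4. lra.
    - assert (0 < Rabs (sin (t/2))) by (apply Rabs_pos_lt; auto).
      pose proof (sin_half_abs_ge t Ht).
      apply Rle_trans with (/ (INR n * Rabs (sin (t / 2))) * (INR n * Rabs t)).
      apply Rmult_le_compat_r. nra. apply Rmin_r.
      replace (/ (INR n * Rabs (sin (t / 2))) * (INR n * Rabs t)) with (Rabs t / Rabs (sin (t/2))) by (field; lra).
      apply (Rmult_le_reg_r (Rabs (sin (t/2)))); auto.
      replace (Rabs t / Rabs (sin (t / 2)) * Rabs (sin (t / 2))) with (Rabs t) by (field; lra).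
      apply (Rmult_le_reg_r (/ PI)). apply Rinv_0_lt_compat; lra.
      replace (PI * Rabs (sin (t / 2)) * / PI) with (Rabs (sin (t/2))) by (field; lra). exact H3. }
  lra.
Qed.

Lemma dlt_periodic t : dlt n (t + 2 * PI) = dlt n t.
Proof.
  unfold dlt. replace ((t + 2 * PI) / 2) with (t / 2 + PI) by field. rewrite neg_sin.
  rewrite Rabs_Ropp.
  destruct (Req_EM_T (- sin (t/2)) 0); destruct (Req_EM_T (sin (t/2)) 0); auto; lra.
Qed.

Lemma fejer_le_dlt t : fejer n t <= (INR n * dlt n t) ^ 2.
Proof.
  pose proof INRn_ge1. pose proof (fejer_le_sqr n t).
  unfold dlt. destruct (Req_EM_T _ _) as [E|E].
  - rewrite Rmult_1_r. auto.
  - assert (P : 0 < Rabs (sin (t/2))) by (apply Rabs_pos_lt; auto).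
    pose proof (fejer_le_inv_sin_half_sqr n t E).
    unfold Rmin. destruct (Rle_dec 1 _).
    + rewrite Rmult_1_r; auto.
    + replace ((INR n * / (INR n * Rabs (sin (t / 2)))) ^ 2) with (/ sin (t/2) ^ 2).
      auto. rewrite <- (pow2_abs (sin (t/2))). field. lra.
Qed.

Lemma fejer_ge_dlt t : / 4 <= sin (INR n * t / 2) ^ 2 -> / 4 * (INR n * dlt n t) ^ 2 <= fejer n t.
Proof.
  intro Hs. pose proof INRn_ge1. pose proof (sin_half_sqr_mul_fejer n t) as E.
  destruct (Req_EM_T (sin (t/2)) 0) as [Z|Z].
  - rewrite Z in E. simpl in E. lra.
  - unfold dlt. destruct (Req_EM_T _ _) as [E2|E2]; [contradiction|].
    assert (P : 0 < Rabs (sin (t/2))) by (apply Rabs_pos_lt; auto).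
    assert (Q : 0 < sin (t/2) ^ 2) by (apply pow2_gt_0; auto).
    assert (fejer n t = sin (INR n * t / 2) ^ 2 / sin (t/2) ^ 2) by (rewrite <- E; field; auto).
    rewrite H0.
    apply Rle_trans with (/ 4 * (/ sin (t/2) ^ 2)).
    + apply Rmult_le_compat_l. lra.
      replace (/ sin (t / 2) ^ 2) with ((INR n * / (INR n * Rabs (sin (t / 2)))) ^ 2)
        by (rewrite <- (pow2_abs (sin (t/2))); field; lra).
      apply pow_incr. split. apply Rmult_le_pos. lra. apply Rmin_glb. lra. left; apply Rinv_0_lt_compat; nra.
      apply Rmult_le_compat_l. lra. apply Rmin_r.
    + unfold Rdiv. apply Rmult_le_compat_r. left; apply Rinv_0_lt_compat; auto. auto.
Qed.

End DL.

Section Main.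
Variables (s l : nat) (C12 : R).
Hypothesis Hs : (1 <= s)%nat.
Hypothesis Hsl : (s < l)%nat.
Hypothesis HC : C12_prop l C12.

Lemma C12_ge1 : 1 <= C12.
Proof.
  destruct HC as [_ H]. specialize (H 1%nat 0%nat (le_n _) (Nat.le_0_l _)).
  rewrite (RInt_ext _ (J_ln l 1)) in H.
  2:{ intros. simpl. ring. }
  rewrite RInt_J_ln in H; auto.
Qed.

Definition c_gamma := 2 * 2 ^ (2 * l) / PI ^ (2 * l).
Definition C_ratio := 1 + / (2 * INR s * C12).
Definition C_deriv := C_ratio ^ (2 * s) / c_gamma.
Definition pdecay := (2 * (l - s))%nat.

Lemma c_gamma_pos : 0 < c_gamma.
Proof.
  pose proof PI_gt_3. unfold c_gamma. unfold Rdiv. apply Rmult_lt_0_compat.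
  apply Rmult_lt_0_compat. lra. apply pow_lt; lra. apply Rinv_0_lt_compat, pow_lt; lra.
Qed.

Lemma C_ratio_ge1 : 1 <= C_ratio.
Proof.
  pose proof C12_ge1. assert (1 <= INR s) by (apply (le_INR 1); lia).
  unfold C_ratio. assert (0 < / (2 * INR s * C12)) by (apply Rinv_0_lt_compat; nra). lra.
Qed.

Lemma C_deriv_pos : 0 < C_deriv.
Proof.
  unfold C_deriv. unfold Rdiv. apply Rmult_lt_0_compat. apply pow_lt. pose proof C_ratio_ge1; lra.
  apply Rinv_0_lt_compat, c_gamma_pos.
Qed.

Lemma gamma_ln_ge_pow n : (1 <= n)%nat -> c_gamma * INR n ^ (2 * l - 1) <= gamma_ln l n.
Proof.
  intro Hn. eapply Rle_trans; [|apply gamma_ln_ge; auto]. right.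
  assert (1 <= INR n) by (apply (le_INR 1); lia). pose proof PI_gt_3.
  assert (Hm : INR n ^ (2 * l) = INR n ^ (2 * l - 1) * INR n).
  { replace (2 * l)%nat with (S (2 * l - 1)) at 1 by lia. simpl. ring. }
  replace (2 * INR n / PI) with (2 * INR n * / PI) by reflexivity.
  rewrite !Rpow_mult_distr, pow_inv, Hm. unfold c_gamma.
  assert (0 < PI ^ (2 * l)) by (apply pow_lt; lra). field. lra.
Qed.

Definition C_gamma := (2 * PI) ^ (2 * l) * (2 / INR (2 * l - 1)).

Lemma C_gamma_pos : 0 < C_gamma.
Proof.
  pose proof PI_gt_3. unfold C_gamma. apply Rmult_lt_0_compat. apply pow_lt; lra.
  unfold Rdiv. apply Rmult_lt_0_compat. lra. apply Rinv_0_lt_compat, lt_0_INR. lia.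
Qed.

Lemma gamma_ln_le_pow n : (1 <= n)%nat -> gamma_ln l n <= C_gamma * INR n ^ (2 * l - 1).
Proof.
  intro Hn. eapply Rle_trans. apply gamma_ln_le; auto; lia. unfold C_gamma. right. ring.
Qed.

Lemma pow_2l_pred (a : R) : a ^ (2 * l - 1) * a = a ^ (2 * l).
Proof. replace (2 * l)%nat with (S (2 * l - 1)) at 2 by lia. simpl. ring. Qed.

Lemma J_ln_le_dlt n t : (1 <= n)%nat -> J_ln l n t <= INR n / c_gamma * dlt n t ^ (2 * l).
Proof.
  intro Hn. pose proof (INRn_ge1 n Hn). pose proof (gamma_ln_ge_pow n Hn). pose proof c_gamma_pos.
  pose proof (dlt_pos n Hn t) as [D0 D1].
  assert (Hnp : 0 < INR n ^ (2 * l - 1)) by (apply pow_lt; lra).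
  assert (F : fejer n t ^ l <= INR n ^ (2 * l - 1) * INR n * dlt n t ^ (2 * l)).
  { rewrite pow_2l_pred, <- Rpow_mult_distr, pow_mult.
    apply pow_incr. split. apply fejer_ge0. apply fejer_le_dlt; auto. }
  rewrite J_ln_fejer. unfold Rdiv.
  apply Rle_trans with
    (INR n ^ (2 * l - 1) * INR n * dlt n t ^ (2 * l) * / (c_gamma * INR n ^ (2 * l - 1))).
  - apply Rmult_le_compat; auto.
    + apply pow_le, fejer_ge0.
    + left; apply Rinv_0_lt_compat, gamma_ln_pos; auto.
    + apply Rinv_le_contravar; [nra|auto].
  - right. field. split; lra.
Qed.

Lemma J_ln_ge_dlt n t : (1 <= n)%nat -> / 4 <= sin (INR n * t / 2) ^ 2 ->
  / (4 ^ l * C_gamma) * INR n * dlt n t ^ (2 * l) <= J_ln l n t.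
Proof.
  intros Hn Hq. pose proof (INRn_ge1 n Hn). pose proof (gamma_ln_le_pow n Hn).
  pose proof C_gamma_pos. pose proof (gamma_ln_pos l n Hn).
  pose proof (dlt_pos n Hn t) as [D0 D1].
  assert (Hnp : 0 < INR n ^ (2 * l - 1)) by (apply pow_lt; lra).
  assert (H4 : 0 < 4 ^ l) by (apply pow_lt; lra).
  assert (Hdl : 0 <= dlt n t ^ (2 * l)) by (apply pow_le; lra).
  assert (F : / 4 ^ l * (INR n ^ (2 * l - 1) * INR n * dlt n t ^ (2 * l)) <= fejer n t ^ l).
  { rewrite pow_2l_pred, <- Rpow_mult_distr, pow_mult, <- pow_inv, <- Rpow_mult_distr.
    apply pow_incr. split. apply Rmult_le_pos; [lra|apply pow2_ge_0]. apply fejer_ge_dlt; auto. }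
  rewrite J_ln_fejer. unfold Rdiv.
  apply Rle_trans with
    (/ 4 ^ l * (INR n ^ (2 * l - 1) * INR n * dlt n t ^ (2 * l)) * / (C_gamma * INR n ^ (2 * l - 1))).
  - right. field. repeat split; lra.
  - apply Rmult_le_compat; auto.
    + apply Rmult_le_pos; [left; apply Rinv_0_lt_compat; lra|]. apply Rmult_le_pos; [nra|auto].
    + left; apply Rinv_0_lt_compat; nra.
    + apply Rinv_le_contravar; auto.
Qed.

Section Configuration.
Variables (n : nat) (y : nat -> R) (xs : R).
Hypothesis Hn : (1 <= n)%nat.
Hypothesis Hdist : forall i : Z, 2 * INR s * C12 * PI / INR n <= Rabs (xs - yext s y i).

Lemma n_ge1 : 1 <= INR n.
Proof. apply (le_INR 1); lia. Qed.

Lemma s_ge1 : 1 <= INR s.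
Proof. apply (le_INR 1); lia. Qed.

Lemma sin_half_Y_ge : forall j, (1 <= j <= 2 * s)%nat -> 2 * INR s * C12 / INR n <= Rabs (sin ((xs - y j) / 2)).
Proof.
  intros j Hj. pose proof n_ge1. pose proof PI_gt_3.
  destruct (sin_half_dist_ge s y xs _ Hs Hdist j Hj) as [H1 _].
  replace (2 * INR s * C12 * PI / INR n / PI) with (2 * INR s * C12 / INR n) in H1 by (field; lra).
  exact H1.
Qed.

Lemma sC12_le_n : 2 * INR s * C12 <= INR n.
Proof.
  pose proof n_ge1. pose proof PI_gt_3.
  destruct (sin_half_dist_ge s y xs _ Hs Hdist 1%nat ltac:(lia)) as [_ H1].
  apply (Rmult_le_reg_r (PI / INR n)). unfold Rdiv; apply Rmult_lt_0_compat; [lra|apply Rinv_0_lt_compat; lra].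
  replace (INR n * (PI / INR n)) with PI by (field; lra).
  replace (2 * INR s * C12 * (PI / INR n)) with (2 * INR s * C12 * PI / INR n) by (field; lra). exact H1.
Qed.

Definition Jratio t := J_ln l n t * ratioPi s y xs t.

Lemma Jratio_cont : Rcont Jratio.
Proof. apply (Rcont_mult (J_ln l n) (ratioPi s y xs)). apply J_ln_cont. apply ratioPi_cont. Qed.

Definition Jratio_at t := J_ln l n (t - xs) * (PiY s y t / PiY s y xs).

Lemma Jratio_at_eq t : Jratio_at t = Jratio (t - xs).
Proof. unfold Jratio_at, Jratio, ratioPi. replace (t - xs + xs) with t by ring. reflexivity. Qed.

Lemma Jratio_at_cont : Rcont Jratio_at.
Proof.
  apply (Rcont_ext (fun t => Jratio (t + - xs))). apply Rcont_shift. apply Jratio_cont.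
  intro t. rewrite Jratio_at_eq. reflexivity.
Qed.

Lemma RInt_Jratio_at a b : RInt Jratio_at a b = RInt Jratio (a - xs) (b - xs).
Proof.
  rewrite (RInt_ext _ (fun t => Jratio (t - xs))) by (intros; apply Jratio_at_eq).
  apply RInt_shift. apply Jratio_cont.
Qed.

Lemma d_ln_Jratio : d_ln s l n y xs = RInt Jratio (- PI) PI.
Proof.
  unfold d_ln. fold Jratio_at. rewrite RInt_Jratio_at.
  f_equal; ring.
Qed.

Lemma T_ln_Jratio x : T_ln s l n y xs x = / d_ln s l n y xs * RInt Jratio (- PI) (x - xs).
Proof.
  unfold T_ln at 1. fold Jratio_at. rewrite RInt_Jratio_at. f_equal. f_equal. ring.
Qed.

Lemma weight_dlt_le t : (1 + cot_bound s n C12 * Rabs (sin (t/2))) * dlt n t <= C_ratio.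
Proof.
  pose proof n_ge1. pose proof s_ge1. pose proof C12_ge1.
  assert (HK : cot_bound s n C12 / INR n = / (2 * INR s * C12)) by (unfold cot_bound; field; split; lra).
  assert (HK0 : 0 <= cot_bound s n C12) by (unfold cot_bound; unfold Rdiv; apply Rmult_le_pos; [lra|left; apply Rinv_0_lt_compat; nra]).
  pose proof (dlt_pos n Hn t) as [D0 D1].
  unfold C_ratio. unfold dlt in *. destruct (Req_EM_T _ _) as [E|E].
  - rewrite E, Rabs_R0. assert (0 < / (2 * INR s * C12)) by (apply Rinv_0_lt_compat; nra). lra.
  - assert (P : 0 < Rabs (sin (t/2))) by (apply Rabs_pos_lt; auto).
    set (u := Rabs (sin (t / 2))) in *. set (dd := Rmin 1 (/ (INR n * u))) in *.
    assert (Hd2 : dd <= / (INR n * u)) by apply Rmin_r.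
    assert (cot_bound s n C12 * u * dd <= cot_bound s n C12 / INR n).
    { apply Rle_trans with (cot_bound s n C12 * u * / (INR n * u)).
      apply Rmult_le_compat_l; [nra|auto]. right. field. lra. }
    rewrite HK in H2. nra.
Qed.

Lemma Rabs_ratioPi_mul_dlt_le t : Rabs (ratioPi s y xs t) * dlt n t ^ (2 * s) <= C_ratio ^ (2 * s).
Proof.
  pose proof (dlt_pos n Hn t) as [D0 D1].
  assert (0 <= cot_bound s n C12 * Rabs (sin (t / 2))).
  { apply Rmult_le_pos; [apply cot_bound_ge0; auto; apply C12_ge1|apply Rabs_pos]. }
  eapply Rle_trans.
  { apply Rmult_le_compat_r; [apply pow_le; lra|].
    apply (Rabs_ratioPi_le s n C12 y xs Hs Hn C12_ge1 sin_half_Y_ge). }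
  rewrite <- Rpow_mult_distr. apply pow_incr. split; [nra|apply weight_dlt_le].
Qed.

Lemma Rabs_Jratio_le t : Rabs (Jratio t) <= C_deriv * INR n * dlt n t ^ pdecay.
Proof.
  pose proof (J_ln_le_dlt n t Hn). pose proof (J_ln_ge0 l n t Hn).
  pose proof (Rabs_ratioPi_mul_dlt_le t). pose proof n_ge1. pose proof c_gamma_pos.
  pose proof (dlt_pos n Hn t) as [D0 D1].
  assert (Hp : 0 <= dlt n t ^ pdecay) by (apply pow_le; lra).
  unfold Jratio. rewrite Rabs_mult, (Rabs_pos_eq (J_ln l n t)) by lra.
  assert (E : dlt n t ^ (2 * l) = dlt n t ^ (2 * s) * dlt n t ^ pdecay)
    by (rewrite <- pow_add; f_equal; unfold pdecay; lia).
  rewrite E in *.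
  apply Rle_trans with (INR n / c_gamma * (dlt n t ^ (2 * s) * dlt n t ^ pdecay) * Rabs (ratioPi s y xs t)).
  { apply Rmult_le_compat_r; [apply Rabs_pos|auto]. }
  replace (INR n / c_gamma * (dlt n t ^ (2 * s) * dlt n t ^ pdecay) * Rabs (ratioPi s y xs t))
    with (INR n / c_gamma * dlt n t ^ pdecay * (Rabs (ratioPi s y xs t) * dlt n t ^ (2 * s))) by ring.
  replace (C_deriv * INR n * dlt n t ^ pdecay)
    with (INR n / c_gamma * dlt n t ^ pdecay * C_ratio ^ (2 * s)) by (unfold C_deriv; field; lra).
  apply Rmult_le_compat_l; auto.
  apply Rmult_le_pos; auto. unfold Rdiv. apply Rmult_le_pos; [lra|left; apply Rinv_0_lt_compat; lra].
Qed.

Lemma d_ln_sub1_eq :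
  d_ln s l n y xs - 1 = RInt (fun t => J_ln l n t * (ratioPi s y xs t - 1)) (- PI) PI.
Proof.
  rewrite d_ln_Jratio, <- (RInt_J_ln l n Hn) at 1.
  rewrite <- RInt_minus_R by (apply Jratio_cont || apply J_ln_cont).
  apply RInt_ext. intros t _. unfold Jratio.
  match goal with |- ?a = ?b => change (@eq R a b) end. ring.
Qed.

Lemma Rabs_J_ln_mul_ratioPi_sub1_le t : Rabs t <= PI ->
  Rabs (J_ln l n t * (ratioPi s y xs t - 1)) <=
    / (2 * C12) * ((1 + INR n * Rabs t) ^ 1 * J_ln l n t - J_ln l n t)
    + 3 / (8 * C12 ^ 2) * ((1 + INR n * Rabs t) ^ (2 * s) * J_ln l n t).
Proof.
  intro Ht. pose proof C12_ge1. pose proof (J_ln_ge0 l n t Hn).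
  pose proof (Rabs_ratioPi_sub1_le s n C12 y xs Hs Hn C12_ge1 sC12_le_n sin_half_Y_ge t Ht).
  rewrite Rabs_mult, (Rabs_pos_eq (J_ln l n t)) by lra.
  eapply Rle_trans; [apply Rmult_le_compat_l; eassumption|]. right. field. lra.
Qed.

Lemma Rabs_d_ln_sub1_lt : Rabs (d_ln s l n y xs - 1) < 1 / 2.
Proof.
  pose proof C12_ge1. pose proof PI_gt_3. destruct HC as [_ Hmom].
  pose proof (J_ln_cont l n). pose proof (ratioPi_cont s y xs).
  assert (HI1 : RInt (fun t => (1 + INR n * Rabs t) ^ 1 * J_ln l n t) (- PI) PI <= C12)
    by (apply Hmom; lia).
  assert (HI2 : RInt (fun t => (1 + INR n * Rabs t) ^ (2 * s) * J_ln l n t) (- PI) PI <= C12)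
    by (apply Hmom; lia).
  rewrite d_ln_sub1_eq.
  eapply Rle_lt_trans. { apply abs_RInt_le_R; [lra|Rcont_tac]. }
  eapply Rle_lt_trans.
  { apply (RInt_le_R _ (fun t =>
        / (2 * C12) * ((1 + INR n * Rabs t) ^ 1 * J_ln l n t - J_ln l n t)
        + 3 / (8 * C12 ^ 2) * ((1 + INR n * Rabs t) ^ (2 * s) * J_ln l n t)));
      [lra|Rcont_tac|Rcont_tac|].
    intros t Ht. cbv beta. apply Rabs_J_ln_mul_ratioPi_sub1_le. apply Rabs_le; lra. }
  rewrite RInt_plus_R, !RInt_scal_R, RInt_minus_R, RInt_J_ln by (auto; Rcont_tac).
  assert (/ (2 * C12) * (C12 - 1) + 3 / (8 * C12 ^ 2) * C12 = 1 / 2 - / (8 * C12))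
    by (field; lra).
  assert (0 < / (8 * C12)) by (apply Rinv_0_lt_compat; lra).
  assert (/ (2 * C12) * (RInt (fun t => (1 + INR n * Rabs t) ^ 1 * J_ln l n t) (- PI) PI - 1)
          <= / (2 * C12) * (C12 - 1))
    by (apply Rmult_le_compat_l; [left; apply Rinv_0_lt_compat|]; lra).
  assert (3 / (8 * C12 ^ 2) * RInt (fun t => (1 + INR n * Rabs t) ^ (2 * s) * J_ln l n t) (- PI) PI
          <= 3 / (8 * C12 ^ 2) * C12)
    by (apply Rmult_le_compat_l; [unfold Rdiv; apply Rmult_le_pos; [lra|left; apply Rinv_0_lt_compat; nra]|lra]).
  lra.
Qed.

Lemma d_ln_bounds : 1 / 2 < d_ln s l n y xs < 3 / 2.
Proof. pose proof Rabs_d_ln_sub1_lt. apply Rabs_def2 in H. lra. Qed.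

Lemma PiY_xs_neq0 : PiY s y xs <> 0.
Proof. apply (PiY_neq0 s n C12 y xs Hs Hn C12_ge1 sin_half_Y_ge). Qed.

Lemma Derive_T_ln x : Derive (T_ln s l n y xs) x = / d_ln s l n y xs * Jratio_at x.
Proof.
  apply is_derive_unique. unfold T_ln. fold Jratio_at.
  apply (is_derive_scal (fun x => RInt Jratio_at (xs - PI) x)).
  apply (is_derive_RInt Jratio_at (RInt Jratio_at (xs - PI)) (xs - PI) x).
  - apply filter_forall. intro b. apply (@RInt_correct R_CompleteNormedModule). apply Rcont_ex_RInt. apply Jratio_at_cont.
  - apply Jratio_at_cont.
Qed.

Lemma PiY_Derive_T_ln_PiY_ge0 x : 0 <= PiY s y xs * Derive (T_ln s l n y xs) x * PiY s y x.
Proof.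
  pose proof PiY_xs_neq0. pose proof d_ln_bounds.
  rewrite Derive_T_ln. unfold Jratio_at.
  replace (PiY s y xs * (/ d_ln s l n y xs * (J_ln l n (x - xs) * (PiY s y x / PiY s y xs))) * PiY s y x)
    with (/ d_ln s l n y xs * J_ln l n (x - xs) * PiY s y x ^ 2) by (field; split; lra).
  apply Rmult_le_pos. apply Rmult_le_pos. left; apply Rinv_0_lt_compat; lra. apply J_ln_ge0; auto.
  apply pow2_ge_0.
Qed.

Lemma Rabs_Derive_T_ln x : Rabs (Derive (T_ln s l n y xs) x) = / d_ln s l n y xs * Rabs (Jratio (x - xs)).
Proof.
  pose proof d_ln_bounds. rewrite Derive_T_ln, Jratio_at_eq, Rabs_mult, Rabs_pos_eq. reflexivity.
  left; apply Rinv_0_lt_compat; lra.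
Qed.

Lemma Rabs_Derive_T_ln_le x : Rabs (Derive (T_ln s l n y xs) x) <= 2 * C_deriv * INR n * (delta_n n x xs) ^ (2 * (l - s)).
Proof.
  pose proof d_ln_bounds. rewrite Rabs_Derive_T_ln, delta_n_dlt.
  pose proof (Rabs_Jratio_le (x - xs)). unfold pdecay in H0.
  assert (/ d_ln s l n y xs <= 2).
  { replace 2 with (/ (1/2)) by field. apply Rinv_le_contravar; lra. }
  assert (0 <= C_deriv * INR n * dlt n (x - xs) ^ (2 * (l - s))).
  { pose proof C_deriv_pos. pose proof n_ge1. pose proof (dlt_pos n Hn (x - xs)).
    apply Rmult_le_pos. nra. apply pow_le; lra. }
  replace (2 * C_deriv * INR n * dlt n (x - xs) ^ (2 * (l - s))) with (2 * (C_deriv * INR n * dlt n (x - xs) ^ (2 * (l - s)))) by ring.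
  apply Rmult_le_compat; auto. left; apply Rinv_0_lt_compat; lra. apply Rabs_pos.
Qed.

Lemma sin_sqr_ge_quarter x : (exists nu : Z,
    xs + 2 * PI * IZR nu / INR n + PI / (2 * INR n) <= x <=
    xs + 2 * PI * IZR nu / INR n + 2 * PI / INR n - PI / (2 * INR n)) ->
  / 4 <= sin (INR n * (x - xs) / 2) ^ 2.
Proof.
  intros [nu [H1 H2]]. pose proof n_ge1. pose proof PI_gt_3.
  set (w := INR n * (x - xs) / 2 - IZR nu * PI).
  assert (W1 : PI / 4 <= w).
  { unfold w. apply (Rmult_le_compat_l (INR n / 2)) in H1; [|lra].
    replace (INR n / 2 * (xs + 2 * PI * IZR nu / INR n + PI / (2 * INR n))) with (INR n / 2 * xs + PI * IZR nu + PI / 4) in H1 by (field; lra).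
    lra. }
  assert (W2 : w <= 3 * PI / 4).
  { unfold w. apply (Rmult_le_compat_l (INR n / 2)) in H2; [|lra].
    replace (INR n / 2 * (xs + 2 * PI * IZR nu / INR n + 2 * PI / INR n - PI / (2 * INR n))) with (INR n / 2 * xs + PI * IZR nu + 3 * PI / 4) in H2 by (field; lra).
    lra. }
  assert (Hsw : / 2 <= sin w).
  { destruct (Rle_or_lt w (PI / 2)).
    - pose proof (jordan_ineq w ltac:(lra)).
      assert (2 / PI * (PI / 4) = / 2) by (field; lra).
      assert (2 / PI * (PI / 4) <= 2 / PI * w).
      { apply Rmult_le_compat_l; auto. unfold Rdiv; apply Rmult_le_pos; [lra|left; apply Rinv_0_lt_compat; lra]. }
      lra.
    - rewrite <- sin_PI_x. pose proof (jordan_ineq (PI - w) ltac:(lra)).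
      assert (2 / PI * (PI / 4) = / 2) by (field; lra).
      assert (2 / PI * (PI / 4) <= 2 / PI * (PI - w)).
      { apply Rmult_le_compat_l; [unfold Rdiv; apply Rmult_le_pos; [lra|left; apply Rinv_0_lt_compat; lra]|lra]. }
      lra. }
  replace (INR n * (x - xs) / 2) with (w + IZR nu * PI) by (unfold w; ring).
  rewrite <- (pow2_abs (sin (w + IZR nu * PI))), Rabs_sin_plus_IZR_PI, Rabs_pos_eq by lra.
  nra.
Qed.

Lemma Rabs_Derive_T_ln_ge x : (exists nu : Z,
    xs + 2 * PI * IZR nu / INR n + PI / (2 * INR n) <= x <=
    xs + 2 * PI * IZR nu / INR n + 2 * PI / INR n - PI / (2 * INR n)) ->
  / (3 / 2 * 4 ^ l * C_gamma) * INR n * (delta_n n x xs) ^ (2 * l) * Rabs (PiY s y x / PiY s y xs)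
    <= Rabs (Derive (T_ln s l n y xs) x).
Proof.
  intro Hx. pose proof d_ln_bounds. pose proof n_ge1. pose proof C_gamma_pos.
  pose proof (J_ln_ge_dlt n (x - xs) Hn (sin_sqr_ge_quarter x Hx)) as HJ.
  pose proof (dlt_pos n Hn (x - xs)) as [D0 D1].
  rewrite Rabs_Derive_T_ln, delta_n_dlt. unfold Jratio, ratioPi. replace (x - xs + xs) with x by ring.
  rewrite Rabs_mult, (Rabs_pos_eq (J_ln l n (x - xs))) by (apply J_ln_ge0; auto).
  set (P := Rabs (PiY s y x / PiY s y xs)). assert (0 <= P) by apply Rabs_pos.
  assert (H4 : 0 < 4 ^ l) by (apply pow_lt; lra).
  assert (Hd : 2 / 3 <= / d_ln s l n y xs).
  { replace (2 / 3) with (/ (3 / 2)) by field. apply Rinv_le_contravar; lra. }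
  set (j := / (4 ^ l * C_gamma) * INR n * dlt n (x - xs) ^ (2 * l)) in HJ.
  assert (0 <= j).
  { unfold j. apply Rmult_le_pos; [|apply pow_le; lra].
    apply Rmult_le_pos; [left; apply Rinv_0_lt_compat; nra|lra]. }
  replace (/ (3 / 2 * 4 ^ l * C_gamma) * INR n * dlt n (x - xs) ^ (2 * l) * P)
    with (2 / 3 * (j * P)) by (unfold j; field; lra).
  apply Rmult_le_compat; try lra.
  - apply Rmult_le_pos; auto.
  - apply Rmult_le_compat_r; auto.
Qed.

Definition C_tail := C_deriv * (1 + PI) ^ pdecay.

Lemma C_tail_pos : 0 < C_tail.
Proof. unfold C_tail. pose proof C_deriv_pos. pose proof PI_gt_3. apply Rmult_lt_0_compat; auto. apply pow_lt; lra. Qed.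

Lemma Rabs_Jratio_le_decay tau z : dlt n tau = dlt n z -> Rabs z <= PI -> Rabs (Jratio tau) <= C_tail * decay n pdecay z.
Proof.
  intros Ed Hz. pose proof (Rabs_Jratio_le tau) as GB. rewrite Ed in GB.
  pose proof n_ge1. pose proof PI_gt_3. pose proof C_deriv_pos. pose proof (Rabs_pos z).
  pose proof (dlt_pos n Hn z) as [D0 D1].
  assert (Hb : 0 < 1 + INR n * Rabs z) by nra.
  pose proof (dlt_le n Hn z Hz) as U.
  eapply Rle_trans; [exact GB|].
  unfold C_tail, decay.
  assert (dlt n z ^ pdecay <= ((1 + PI) / (1 + INR n * Rabs z)) ^ pdecay) by (apply pow_incr; lra).
  replace (((1 + PI) / (1 + INR n * Rabs z)) ^ pdecay) with ((1 + PI) ^ pdecay / (1 + INR n * Rabs z) ^ pdecay) in H3.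
  2:{ unfold Rdiv. rewrite Rpow_mult_distr, pow_inv. reflexivity. }
  replace (C_deriv * (1 + PI) ^ pdecay * (INR n / (1 + INR n * Rabs z) ^ pdecay)) with (C_deriv * INR n * ((1 + PI) ^ pdecay / (1 + INR n * Rabs z) ^ pdecay)).
  2:{ field. apply pow_nonzero. lra. }
  apply Rmult_le_compat_l; auto. nra.
Qed.

Lemma pdecay_S2 : pdecay = S (S (pdecay - 2)).
Proof. unfold pdecay. lia. Qed.

Lemma decay_tail_le_dlt z : / (1 + INR n * Rabs z) ^ (S (pdecay - 2)) / INR (S (pdecay - 2)) <= dlt n z ^ (pdecay - 1).
Proof.
  pose proof n_ge1. pose proof (Rabs_pos z). pose proof (dlt_ge n Hn z).
  assert (Hb : 0 < 1 + INR n * Rabs z) by nra.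
  replace (pdecay - 1)%nat with (S (pdecay - 2)) by (unfold pdecay; lia).
  assert (HI : 1 <= INR (S (pdecay - 2))) by (apply (le_INR 1); lia).
  rewrite <- pow_inv.
  assert (0 <= (/ (1 + INR n * Rabs z)) ^ S (pdecay - 2)) by (apply pow_le; left; apply Rinv_0_lt_compat; lra).
  apply Rle_trans with ((/ (1 + INR n * Rabs z)) ^ S (pdecay - 2)).
  - unfold Rdiv. rewrite <- (Rmult_1_r ((/ (1 + INR n * Rabs z)) ^ S (pdecay - 2))) at 2.
    apply Rmult_le_compat_l; auto. rewrite <- Rinv_1. apply Rinv_le_contravar; lra.
  - apply pow_incr. split; auto. left; apply Rinv_0_lt_compat; lra.
Qed.

Lemma Rabs_RInt_Jratio_le_decay a b c : a <= b ->
  (forall u, dlt n (u + c) = dlt n u) -> (forall u, a <= u <= b -> Rabs (u + c) <= PI) ->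
  Rabs (RInt Jratio a b) <= C_tail * RInt (decay n pdecay) (a + c) (b + c).
Proof.
  intros Hab Hper Hu. pose proof Jratio_cont. pose proof (decay_cont n pdecay).
  assert (Hdc : Rcont (fun u => decay n pdecay (u + c))) by (apply Rcont_shift; auto).
  eapply Rle_trans. { apply abs_RInt_le_R; auto. }
  eapply Rle_trans.
  { apply (RInt_le_R _ (fun u => C_tail * decay n pdecay (u + c))); [lra|Rcont_tac|Rcont_tac|].
    intros u Hu'. cbv beta. apply Rabs_Jratio_le_decay; auto. }
  rewrite RInt_scal_R by auto. apply Rmult_le_compat_l; [left; apply C_tail_pos|].
  rewrite (RInt_ext _ (fun u => decay n pdecay (u - - c)))
    by (intros; cbv beta; f_equal; ring).
  rewrite RInt_shift by auto. right. f_equal; ring.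
Qed.

Lemma tail_left t : - PI <= t <= 0 -> Rabs (RInt Jratio (- PI) t) <= C_tail * dlt n t ^ (pdecay - 1).
Proof.
  intro Ht. pose proof C_tail_pos.
  eapply Rle_trans.
  { apply (Rabs_RInt_Jratio_le_decay _ _ 0); [lra|intro; f_equal; ring|].
    intros u Hu. rewrite Rplus_0_r. apply Rabs_le; lra. }
  rewrite !Rplus_0_r. apply Rmult_le_compat_l; [lra|].
  rewrite pdecay_S2 at 1. eapply Rle_trans. apply RInt_decay_nonpos_le. lra. apply decay_tail_le_dlt.
Qed.

Lemma tail_right t : 0 <= t <= PI -> Rabs (RInt Jratio t PI) <= C_tail * dlt n t ^ (pdecay - 1).
Proof.
  intro Ht. pose proof C_tail_pos.
  eapply Rle_trans.
  { apply (Rabs_RInt_Jratio_le_decay _ _ 0); [lra|intro; f_equal; ring|].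
    intros u Hu. rewrite Rplus_0_r. apply Rabs_le; lra. }
  rewrite !Rplus_0_r. apply Rmult_le_compat_l; [lra|].
  rewrite pdecay_S2 at 1. eapply Rle_trans. apply RInt_decay_nonneg_le. lra. apply decay_tail_le_dlt.
Qed.

Lemma tail_left_far t : - (2 * PI) <= t <= - PI ->
  Rabs (RInt Jratio t (- PI)) <= C_tail * dlt n t ^ (pdecay - 1).
Proof.
  intro Ht. pose proof C_tail_pos.
  eapply Rle_trans.
  { apply (Rabs_RInt_Jratio_le_decay _ _ (2 * PI)); [lra|apply dlt_periodic|].
    intros u Hu. apply Rabs_le; lra. }
  replace (- PI + 2 * PI) with PI by ring. apply Rmult_le_compat_l; [lra|].
  rewrite pdecay_S2 at 1. eapply Rle_trans. apply RInt_decay_nonneg_le. lra.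
  rewrite <- (dlt_periodic n t). apply decay_tail_le_dlt.
Qed.

Lemma tail_right_far t : PI <= t <= 2 * PI ->
  Rabs (RInt Jratio PI t) <= C_tail * dlt n t ^ (pdecay - 1).
Proof.
  intro Ht. pose proof C_tail_pos.
  assert (Hper : forall u, dlt n (u + - (2 * PI)) = dlt n u).
  { intro u. rewrite <- (dlt_periodic n (u + - (2 * PI))). f_equal. ring. }
  eapply Rle_trans.
  { apply (Rabs_RInt_Jratio_le_decay _ _ (- (2 * PI))); [lra|exact Hper|].
    intros u Hu. apply Rabs_le; lra. }
  replace (PI + - (2 * PI)) with (- PI) by ring. apply Rmult_le_compat_l; [lra|].
  rewrite pdecay_S2 at 1. eapply Rle_trans. apply RInt_decay_nonpos_le. lra.
  rewrite <- (Hper t). apply decay_tail_le_dlt.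
Qed.

Lemma Rabs_chi_sub_T_ln_le x : Rabs (x - xs) <= 2 * PI ->
  Rabs (chi xs x - T_ln s l n y xs x) <= 2 * C_tail * (delta_n n x xs) ^ (2 * (l - s) - 1).
Proof.
  intro Hx. pose proof d_ln_bounds as [Dd1 Dd2]. pose proof C_tail_pos.
  rewrite T_ln_Jratio, delta_n_dlt. fold pdecay.
  set (t := x - xs) in *. set (d := d_ln s l n y xs) in *.
  assert (Hd : d = RInt Jratio (- PI) PI) by (unfold d; apply d_ln_Jratio).
  assert (Hid : / d <= 2).
  { replace 2 with (/ (1/2)) by field. apply Rinv_le_contravar; lra. }
  assert (Hid0 : 0 < / d) by (apply Rinv_0_lt_compat; lra).
  assert (Ht : - (2 * PI) <= t <= 2 * PI) by (apply Rabs_le_between; exact Hx).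
  pose proof (dlt_pos n Hn t) as [D0 D1].
  assert (HX : 0 <= C_tail * dlt n t ^ (pdecay - 1)) by (apply Rmult_le_pos; [lra|apply pow_le; lra]).
  assert (Fin : forall I, Rabs I <= C_tail * dlt n t ^ (pdecay - 1) -> Rabs (/ d * I) <= 2 * C_tail * dlt n t ^ (pdecay - 1)).
  { intros I HI. rewrite Rabs_mult, (Rabs_pos_eq (/ d)) by lra.
    replace (2 * C_tail * dlt n t ^ (pdecay - 1)) with (2 * (C_tail * dlt n t ^ (pdecay - 1))) by ring.
    apply Rmult_le_compat; auto. lra. apply Rabs_pos. }
  pose proof Jratio_cont as Gc.
  unfold chi. destruct (Rle_dec x xs) as [Hle|Hgt].
  - assert (t <= 0) by (unfold t; lra).
    rewrite Rminus_0_l, Rabs_Ropp. apply Fin.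
    destruct (Rle_or_lt (- PI) t).
    + apply tail_left; lra.
    + rewrite (RInt_swap_R Jratio t (- PI) Gc), Rabs_Ropp. apply tail_left_far; lra.
  - assert (0 < t) by (unfold t; lra).
    destruct (Rle_or_lt t PI).
    + replace (1 - / d * RInt Jratio (- PI) t) with (/ d * RInt Jratio t PI).
      apply Fin. apply tail_right; lra.
      rewrite <- (RInt_Chasles_R Jratio (- PI) t PI Gc) in Hd. rewrite Hd. field.
      rewrite <- Hd. lra.
    + replace (1 - / d * RInt Jratio (- PI) t) with (- (/ d * RInt Jratio PI t)).
      rewrite Rabs_Ropp. apply Fin. apply tail_right_far; lra.
      rewrite <- (RInt_Chasles_R Jratio (- PI) PI t Gc). rewrite <- Hd. field. lra.
Qed.

Lemma TrigPoly_Jratio_at : TrigPoly (l * (n - 1) + s) Jratio_at.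
Proof.
  pose proof (gamma_ln_pos l n Hn). pose proof PiY_xs_neq0.
  replace (n - 1)%nat with (pred n) by lia.
  eapply TrigPoly_ext.
  - apply (TrigPoly_scal _ (/ (gamma_ln l n * PiY s y xs))).
    apply (TrigPoly_mul (l * pred n) s (fun x => fejer n (x + - xs) ^ l) (PiY s y)).
    + apply (TrigPoly_shift (l * pred n) (- xs) (fun x => fejer n x ^ l)). apply TrigPoly_pow. apply TrigPoly_fejer.
    + apply TrigPoly_PiY.
  - intro x. unfold Jratio_at. rewrite J_ln_fejer. cbv beta. replace (x + - xs) with (x - xs) by ring.
    field. split; lra.
Qed.

Lemma T_ln_trig_poly : exists Tt : R -> R, trig_poly (l * (n - 1) + s) Tt /\
  forall x, T_ln s l n y xs x = x / (2 * PI) + Tt x.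
Proof.
  pose proof d_ln_bounds as [Dd1 Dd2]. pose proof PI_gt_3.
  destruct (TrigPoly_RInt _ _ TrigPoly_Jratio_at) as [a0 [S0 [HS [Hp HI]]]].
  set (d := d_ln s l n y xs).
  assert (Hd : d = 2 * PI * a0).
  { unfold d, d_ln. fold Jratio_at. rewrite HI.
    replace (xs + PI) with ((xs - PI) + 2 * PI) by ring. rewrite Hp. ring. }
  exists (fun x => / d * (a0 * (PI - xs) + (S0 x - S0 (xs - PI)))).
  split.
  - apply TrigPoly_trig_poly. eapply TrigPoly_ext.
    + apply (TrigPoly_scal _ (/ d)).
      apply (TrigPoly_add _ (fun _ => a0 * (PI - xs)) (fun x => S0 x + - S0 (xs - PI))). apply TrigPoly_const.
      apply (TrigPoly_add _ S0 (fun _ => - S0 (xs - PI))). auto. apply TrigPoly_const.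
    + intro x. cbv beta. ring.
  - intro x. unfold T_ln. fold Jratio_at. fold d. rewrite HI.
    assert (HPI : PI <> 0) by apply PI_neq0.
    assert (Hd0 : d <> 0) by (apply Rgt_not_eq; unfold d; lra).
    assert (Ha : a0 = d / (2 * PI)) by (rewrite Hd; field; exact HPI).
    rewrite Ha. field. split; assumption.
Qed.

End Configuration.
End Main.

Theorem lemma5 (s l : nat) (C12 : R) :
  (1 <= s)%nat -> (s < l)%nat -> C12_prop l C12 ->
  exists C13 C14 C15 : R, 0 < C13 /\ 0 < C14 /\ 0 < C15 /\
  forall (n : nat) (y : nat -> R) (xs : R),
    (1 <= n)%nat -> Y_ok s y ->
    (forall i : Z, 2 * INR s * C12 * PI / INR n <= Rabs (xs - yext s y i)) ->
    (1 / 2 < d_ln s l n y xs < 3 / 2) /\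
    (exists Tt : R -> R, trig_poly (l * (n - 1) + s) Tt /\
       forall x, T_ln s l n y xs x = x / (2 * PI) + Tt x) /\
    (forall x, 0 <= PiY s y xs * Derive (T_ln s l n y xs) x * PiY s y x) /\
    (forall x, Rabs (Derive (T_ln s l n y xs) x)
               <= C13 * INR n * (delta_n n x xs) ^ (2 * (l - s))) /\
    (forall x, (exists nu : Z,
                  xs + 2 * PI * IZR nu / INR n + PI / (2 * INR n) <= x <=
                  xs + 2 * PI * IZR nu / INR n + 2 * PI / INR n - PI / (2 * INR n)) ->
       / C14 * INR n * (delta_n n x xs) ^ (2 * l) * Rabs (PiY s y x / PiY s y xs)
         <= Rabs (Derive (T_ln s l n y xs) x)) /\
    (forall x, Rabs (x - xs) <= 2 * PI ->
       Rabs (chi xs x - T_ln s l n y xs x)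
         <= C15 * (delta_n n x xs) ^ (2 * (l - s) - 1)).
Proof.
  intros Hs Hsl HC.
  exists (2 * C_deriv s l C12), (3 / 2 * 4 ^ l * C_gamma l), (2 * C_tail s l C12).
  pose proof (C_deriv_pos s l C12 Hs Hsl HC).
  pose proof (C_tail_pos s l C12 Hs Hsl HC).
  pose proof (C_gamma_pos s l Hs Hsl).
  assert (0 < 4 ^ l) by (apply pow_lt; lra).
  split; [lra|]. split; [apply Rmult_lt_0_compat; [lra|auto]|]. split; [lra|].
  intros n y xs Hn _ Hdist.
  split; [apply (d_ln_bounds s l C12 Hs Hsl HC n y xs Hn Hdist)|].
  split; [apply (T_ln_trig_poly s l C12 Hs Hsl HC n y xs Hn Hdist)|].
  split; [intro x; apply (PiY_Derive_T_ln_PiY_ge0 s l C12 Hs Hsl HC n y xs Hn Hdist x)|].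
  split; [intro x; apply (Rabs_Derive_T_ln_le s l C12 Hs Hsl HC n y xs Hn Hdist x)|].
  split; [intros x Hx; apply (Rabs_Derive_T_ln_ge s l C12 Hs Hsl HC n y xs Hn Hdist x Hx)|].
  intros x Hx; apply (Rabs_chi_sub_T_ln_le s l C12 Hs Hsl HC n y xs Hn Hdist x Hx).
Qed.
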